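(* Let $\mathfrak G=\{G^s:s>0\}$ with $G^s_k=(k!)^s$. Neither $\mathcal E^{(\mathfrak G)}(\mathbb R)$ nor $\mathcal E^{\{\mathfrak G\}}(\mathbb R)$ coincides (as a vector space) with any of $\mathcal E^{(M)}(\mathbb R)$, $\mathcal E^{\{M\}}(\mathbb R)$, $\mathcal E^{(\omega)}(\mathbb R)$, $\mathcal E^{\{\omega\}}(\mathbb R)$, for any sequence $M\in\mathbb R_{>0}^{\mathbb N}$ or any weight function $\omega\in\mathscr W$.
   Context: For $M\in\mathbb R_{>0}^{\mathbb N}$, compact $K\subseteq\mathbb R$, $\rho>0$: $\|f\|^M_{K,\rho}:=\sup\{|f^{(k)}(x)|/(k!\rho^kM_k):x\in K,k\in\mathbb N\}$; $\mathcal E^{(M)}(\mathbb R)$ = smooth $f$ with $\|f\|^M_{K,\rho}<\infty$ for all compact $K$, all $\rho>0$; $\mathcal E^{\{M\}}(\mathbb R)$ = smooth $f$ such that for every compact $K$ there is $\rho$ with $\|f\|^M_{K,\rho}<\infty$; $\mathcal E^{\{M\}}(K)$ = smooth functions on $K$ with some finite $\|f\|^M_{K,\rho}$. $\mathcal E^{(\mathfrak G)}(\mathbb R):=\bigcap_{s>0}\mathcal E^{(G^s)}(\mathbb R)$ and $\mathcal E^{\{\mathfrak G\}}(\mathbb R):=\bigcap_{K}\bigcup_{s>0}\mathcal E^{\{G^s\}}(K)$ (smooth $f$ whose restriction to each compact $K$ lies in some $\mathcal E^{\{G^s\}}(K)$). $\mathscr W$: continuous increasing $\omega:[0,\infty)\to[0,\infty)$,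 $\omega|_{[0,1]}=0$, $\omega\to\infty$, $\omega(2t)=O(\omega(t))$, $\log t=o(\omega(t))$, $t\mapsto\varphi(t):=\omega(e^t)$ convex on $[0,\infty)$; $\varphi^*(t):=\sup_{s\ge0}(st-\varphi(s))$. $\mathcal E^{(\omega)}(\mathbb R)$ / $\mathcal E^{\{\omega\}}(\mathbb R)$: smooth $f$ with $\sup_{x\in K,k}|f^{(k)}(x)|\exp(-\frac1\rho\varphi^*(\rho k))<\infty$ for all compact $K$ and all $\rho>0$ / for all $K$ and some $\rho>0$. *)

From Stdlib Require Import Reals Rtopology Factorial.
From Coquelicot Require Import Coquelicot.
Open Scope R_scope.

Definition smooth (f : R -> R) : Prop := forall (k : nat) (x : R), ex_derive_n f k x.

Definition cpt (K : R -> Prop) : Prop := compact K.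

Definition DCseminorm_finite (M : nat -> R) (K : R -> Prop) (rho : R) (f : R -> R) : Prop :=
  exists C : R, forall (x : R) (k : nat), K x ->
    Rabs (Derive_n f k x) <= C * (INR (fact k) * rho ^ k * M k).

Definition E_beur (M : nat -> R) (f : R -> R) : Prop :=
  smooth f /\ forall K, cpt K -> forall rho, 0 < rho -> DCseminorm_finite M K rho f.

Definition E_roum (M : nat -> R) (f : R -> R) : Prop :=
  smooth f /\ forall K, cpt K -> exists rho, 0 < rho /\ DCseminorm_finite M K rho f.

Definition Gev (s : R) : nat -> R := fun k => Rpower (INR (fact k)) s.

Definition E_G_beur (f : R -> R) : Prop :=
  forall s, 0 < s -> E_beur (Gev s) f.

(* E^{{G}}(R): smooth f such that for every compact K there are s>0, rho>0
   with ||f||^{G^s}_{K,rho} finite (restriction lies in some E^{{G^s}}(K)) *)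
Definition E_G_roum (f : R -> R) : Prop :=
  smooth f /\ forall K, cpt K -> exists s, 0 < s /\ exists rho, 0 < rho /\
    DCseminorm_finite (Gev s) K rho f.

Definition phi_of (om : R -> R) (t : R) : R := om (exp t).

Definition weight (om : R -> R) : Prop :=
  (forall t, 0 < t -> continuity_pt om t) /\
  (forall t, 0 <= t -> 0 <= om t) /\
  (forall s t, 0 <= s -> s <= t -> om s <= om t) /\
  (forall t, 0 <= t -> t <= 1 -> om t = 0) /\
  (forall A, exists T, forall t, T <= t -> A <= om t) /\
  (exists C T, forall t, T <= t -> om (2 * t) <= C * om t) /\
  (forall eps, 0 < eps -> exists T, forall t, T <= t -> Rabs (ln t) <= eps * om t) /\
  (forall s1 s2 l, 0 <= s1 -> 0 <= s2 -> 0 <= l -> l <= 1 ->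
     phi_of om (l * s1 + (1 - l) * s2) <= l * phi_of om s1 + (1 - l) * phi_of om s2).

(* Young conjugate phi*(t) = sup_{s>=0} (s t - phi(s)) (finite for weights, t >= 0) *)
Definition phi_star (om : R -> R) (t : R) : R :=
  real (Lub_Rbar (fun y => exists s, 0 <= s /\ y = s * t - phi_of om s)).

Definition om_bounded (om : R -> R) (K : R -> Prop) (rho : R) (f : R -> R) : Prop :=
  exists C : R, forall (x : R) (k : nat), K x ->
    Rabs (Derive_n f k x) * exp (- (/ rho) * phi_star om (rho * INR k)) <= C.

Definition E_om_beur (om : R -> R) (f : R -> R) : Prop :=
  smooth f /\ forall K, cpt K -> forall rho, 0 < rho -> om_bounded om K rho f.

Definition E_om_roum (om : R -> R) (f : R -> R) : Prop :=
  smooth f /\ forall K, cpt K -> exists rho, 0 < rho /\ om_bounded om K rho f.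

Definition same_space (P Q : (R -> R) -> Prop) : Prop := forall f, P f <-> Q f.

(* The functions sum_j a_j (cos + sin)(l_j x) have their k-th derivative bounded on R by
   twice its absolute value at 0, so their membership in any of the spaces only depends on
   this sequence of values at 0; it therefore suffices to separate the corresponding
   spaces of sequences, tested on sums of weighted geometric sequences (which reach all
   log-convex sequences up to a factor 2^(k+1)).
   - If E^(G) agreed with a space defined by M or om: the sequences (k!)^(1+1/(j+1)) are
     not in E^(G), so each of them exceeds the bounds defining the other space along
     some k_j; a weighted sum of Gevrey sequences of these orders, frozen after k_j, lies
     in E^(G) and still beats all these bounds.
   - If E^{G} did: every (k!)^(n+2) is in E^{G}, hence below a bound of the other space;
     a weighted sum of the sequences c_n^k (k!)^(n+1) stays below such a bound but
     contains Gevrey sequences of every order, so it is not in E^{G}. *)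
From Stdlib Require Import Reals Lra Lia Rtopology Factorial ClassicalEpsilon.
From Coquelicot Require Import Coquelicot.
Open Scope R_scope.

Lemma Series_nonneg (a : nat -> R) : ex_series a -> (forall n, 0 <= a n) -> 0 <= Series a.
Proof.
  intros Ha Hp. replace 0 with (Series (fun _ => 0 * 0)) by (rewrite Series_scal_l; ring).
  apply Series_le; auto. intros n. pose proof (Hp n). lra.
Qed.

Lemma Series_ge_term (a : nat -> R) k : ex_series a -> (forall n, 0 <= a n) -> a k <= Series a.
Proof.
  intros Ha Hp. rewrite (Series_incr_n a (S k)) by (auto; lia). simpl pred.
  assert (0 <= Series (fun j => a (S k + j)%nat)).
  { apply Series_nonneg; auto. apply ex_series_incr_n; auto. }
  assert (a k <= sum_f_R0 a k).
  { destruct k; simpl; [lra|]. pose proof (cond_pos_sum a k Hp). pose proof (Hp (S k)). lra. }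
  lra.
Qed.

Lemma ex_series_half_geom c : ex_series (fun n => c * (/2) ^ S n).
Proof.
  apply (ex_series_ext (fun n => c * / 2 * (/2) ^ n)); [intros; simpl; ring|].
  assert (Hg : ex_series (fun n => (/2) ^ n)) by (apply ex_series_geom; rewrite Rabs_pos_eq; lra).
  apply (ex_series_scal_l (c * / 2)) in Hg. exact Hg.
Qed.

Lemma Series_half_geom c : Series (fun n => c * (/2) ^ S n) = c.
Proof.
  rewrite (Series_ext _ (fun n => c * / 2 * (/2) ^ n)) by (intros; simpl; ring).
  rewrite Series_scal_l, Series_geom by (rewrite Rabs_pos_eq; lra). field.
Qed.

Lemma ex_series_le_half_geom (a : nat -> R) c :
  (forall n, 0 <= a n <= c * (/2) ^ S n) -> ex_series a.
Proof.
  intros H. apply (ex_series_le a (fun n => c * (/2) ^ S n)).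
  - intros n. change (Rabs (a n) <= c * (/2) ^ S n). rewrite Rabs_pos_eq; apply H.
  - apply ex_series_half_geom.
Qed.

Lemma Series_le_half_geom (a : nat -> R) c :
  (forall n, 0 <= a n <= c * (/2) ^ S n) -> Series a <= c.
Proof.
  intros H. rewrite <- (Series_half_geom c). apply Series_le; auto. apply ex_series_half_geom.
Qed.

Lemma is_derive_Series (u u' : nat -> R -> R) (a b : nat -> R) :
  (forall n x, is_derive (u n) x (u' n x)) ->
  (forall n x, Rabs (u n x) <= a n) -> (forall n x, Rabs (u' n x) <= b n) ->
  ex_series a -> ex_series b ->
  forall x, is_derive (fun y => Series (fun n => u n y)) x (Series (fun n => u' n x)).
Proof.
  intros Hd Ha Hb Sa Sb x.
  assert (Hr : 0 < Rabs x + 1) by (pose proof (Rabs_pos x); lra).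
  set (r := mkposreal _ Hr).
  assert (Hb0 : forall n, 0 <= b n) by (intros n; eapply Rle_trans; [apply Rabs_pos | apply (Hb n 0)]).
  assert (Hcv : forall c, ex_series c -> Un_cv (fun n => sum_f_R0 c n) (Series c)).
  { intros c Hc. apply is_series_Reals, Series_correct, Hc. }
  assert (CV : CVN_r u' r).
  { exists b, (Series b). split.
    - apply (Un_cv_ext (fun n => sum_f_R0 b n)); [|auto].
      intros n. apply sum_eq. intros i _. rewrite Rabs_pos_eq; auto.
    - intros n y _. apply Hb. }
  destruct (CVN_CVU_r u' r CV x) as [e He]; [simpl; lra|].
  apply is_derive_Reals, (CVU_derivable (SP u) (SP u') _ _ x e He).
  - intros y _. apply Hcv, (@ex_series_le R_AbsRing R_CompleteNormedModule _ a); auto.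
  - intros n y _. apply is_derive_Reals. unfold SP.
    induction n as [|n IH]; simpl; [apply Hd|].
    apply (is_derive_plus (fun y => sum_f_R0 (fun k => u k y) n) (u (S n))); auto.
  - unfold Boule. rewrite Rminus_diag, Rabs_R0. apply cond_pos.
Qed.

Lemma fin_max (f : nat -> R) (J : nat) : exists B, forall j, (j < J)%nat -> f j <= B.
Proof.
  induction J as [|J [B HB]]; [exists 0; intros; lia|].
  exists (Rmax B (f J)). intros j Hj.
  destruct (Nat.eq_dec j J) as [->|]; [apply Rmax_r|].
  eapply Rle_trans; [apply HB; lia | apply Rmax_l].
Qed.

Definition dominated (V N : nat -> R) : Prop := exists C, forall k, V k <= C * N k.

Lemma dominated_le (U V N : nat -> R) : (forall k, U k <= V k) -> dominated V N -> dominated U N.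
Proof. intros HUV [C HC]. exists C. intros k. eapply Rle_trans; auto. Qed.

Lemma not_dominated_exists (V N : nat -> R) : ~ dominated V N -> forall C, exists k, C * N k < V k.
Proof.
  intros Hn C. apply Classical_Prop.NNPP. intros Hk. apply Hn. exists C. intros k.
  apply Rnot_lt_le. intros Hlt. apply Hk. exists k. exact Hlt.
Qed.

Lemma dominated_Series (a : nat -> nat -> R) (X : nat -> R) (J : nat) :
  (forall j k, 0 <= a j k) -> (forall k, 0 <= X k) ->
  (forall j, (j < J)%nat -> dominated (a j) X) ->
  (forall j k, (J <= j)%nat -> a j k <= (/2) ^ S j * X k) ->
  dominated (fun k => Series (fun j => a j k)) X.
Proof.
  intros Ha HX Hhead Htail.
  destruct (choice (fun j C => (j < J)%nat -> forall k, a j k <= C * X k)) as [C HC].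
  { intros j. destruct (Compare_dec.lt_dec j J) as [Hj|Hj].
    - destruct (Hhead j Hj) as [C HC]. exists C; auto.
    - exists 0. intros; lia. }
  destruct (fin_max (fun j => C j * 2 ^ S j) J) as [Q HQ].
  exists (Rmax Q 1). intros k. apply Series_le_half_geom. intros j. split; [apply Ha|].
  assert (Hjk : 0 <= (/2) ^ S j * X k) by (apply Rmult_le_pos; [apply pow_le; lra | apply HX]).
  replace (Rmax Q 1 * X k * (/2) ^ S j) with (Rmax Q 1 * ((/2) ^ S j * X k)) by ring.
  destruct (Compare_dec.lt_dec j J) as [Hj|Hj].
  - eapply Rle_trans; [apply (HC j Hj)|].
    replace (C j * X k) with (C j * 2 ^ S j * ((/2) ^ S j * X k))
      by (rewrite <- Rmult_assoc, (Rmult_assoc (C j)), <- Rpow_mult_distr, Rinv_r, pow1; lra).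
    apply Rmult_le_compat_r; auto. eapply Rle_trans; [apply (HQ j Hj) | apply Rmax_l].
  - eapply Rle_trans; [apply Htail; lia|].
    rewrite <- (Rmult_1_l ((/2) ^ S j * X k)) at 1. apply Rmult_le_compat_r; auto. apply Rmax_r.
Qed.

Fixpoint dcs (k : nat) (y : R) : R :=
  match k with
  | O => cos y + sin y
  | S O => cos y - sin y
  | S (S k) => - dcs k y
  end.

Lemma dcs_props k :
  (forall y, is_derive (dcs k) y (dcs (S k) y) /\ is_derive (dcs (S k)) y (dcs (S (S k)) y)) /\
  (forall y, Rabs (dcs k y) <= 2 /\ Rabs (dcs (S k) y) <= 2) /\
  Rabs (dcs k 0) = 1 /\ Rabs (dcs (S k) 0) = 1.
Proof.
  induction k as [|k [IHd [IHb IH0]]].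
  - simpl. rewrite cos_0, sin_0, !Rabs_pos_eq by lra.
    split; [|split; [|lra]]; intros y.
    + split; auto_derive; auto; ring.
    + pose proof (COS_bound y); pose proof (SIN_bound y).
      split; unfold Rabs; destruct Rcase_abs; lra.
  - change (dcs (S (S k))) with (fun y => - dcs k y).
    change (dcs (S (S (S k)))) with (fun y => - dcs (S k) y). cbv beta.
    rewrite Rabs_Ropp. split; [|split; [|split; apply IH0]]; intros y; split.
    + apply IHd.
    + apply (is_derive_opp (dcs k)). apply IHd.
    + apply IHb.
    + rewrite Rabs_Ropp. apply IHb.
Qed.

Lemma is_derive_dcs k y : is_derive (dcs k) y (dcs (S k) y).
Proof. apply dcs_props. Qed.

Lemma Rabs_dcs_le k y : Rabs (dcs k y) <= 2.
Proof. apply dcs_props. Qed.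

Lemma Rabs_dcs_0 k : Rabs (dcs k 0) = 1.
Proof. apply dcs_props. Qed.

(* [F 0] is a smooth function with [F k] as k-th derivative, [|F k 0| = V k] and
   [|F k| <= 2 V k] everywhere; so [F 0] lies in a Denjoy-Carleman or weight class
   exactly when [V] lies in the corresponding class of sequences.  The signs [dcs k 0]
   do not depend on [V], which makes realizability stable under sums. *)
Record realizes (V : nat -> R) (F : nat -> R -> R) : Prop := {
  realizes_derive : forall k x, is_derive (F k) x (F (S k) x);
  realizes_bound : forall k x, Rabs (F k x) <= 2 * V k;
  realizes_at_0 : forall k, F k 0 = dcs k 0 * V k }.

Definition realizable (V : nat -> R) : Prop := exists F, realizes V F.

Lemma realizes_nonneg V F : realizes V F -> forall k, 0 <= V k.
Proof.
  intros HF k. pose proof (realizes_bound _ _ HF k 0) as H.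
  rewrite (realizes_at_0 _ _ HF), Rabs_mult, Rabs_dcs_0 in H.
  pose proof (Rabs_pos (V k)). unfold Rabs in *. destruct Rcase_abs; lra.
Qed.

Lemma realizable_nonneg V : realizable V -> forall k, 0 <= V k.
Proof. intros [F HF]. apply (realizes_nonneg V F HF). Qed.

Lemma realizes_Derive_n V F : realizes V F -> forall k x, Derive_n (F 0%nat) k x = F k x.
Proof.
  intros HF k. induction k as [|k IH]; intros x; simpl; auto.
  rewrite (Derive_ext _ (F k)) by auto. apply is_derive_unique, HF.
Qed.

Lemma realizes_smooth V F : realizes V F -> smooth (F 0%nat).
Proof.
  intros HF k x. destruct k; simpl; auto.
  apply (ex_derive_ext (F k)); [intros t; symmetry; apply (realizes_Derive_n V F HF)|].
  exists (F (S k) x). apply HF.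
Qed.

Lemma realizable_geom (l : R) : 0 <= l -> realizable (fun k => l ^ k).
Proof.
  intros Hl. exists (fun k x => l ^ k * dcs k (l * x)). split.
  - intros k x.
    replace (l ^ S k * dcs (S k) (l * x)) with (l ^ k * (l * dcs (S k) (l * x))) by (simpl; ring).
    apply (is_derive_scal (fun x => dcs k (l * x))).
    apply (is_derive_comp (dcs k) (fun x => l * x)); [apply is_derive_dcs|].
    auto_derive; auto; ring.
  - intros k x. rewrite Rabs_mult, Rabs_pos_eq by (apply pow_le; auto).
    pose proof (Rabs_dcs_le k (l * x)). pose proof (pow_le l k Hl). nra.
  - intros k. rewrite Rmult_0_r. ring.
Qed.

Lemma realizable_scal (c : R) V : 0 <= c -> realizable V -> realizable (fun k => c * V k).
Proof.
  intros Hc [F HF]. exists (fun k x => c * F k x). split.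
  - intros k x. apply (is_derive_scal (F k)), HF.
  - intros k x. rewrite Rabs_mult, Rabs_pos_eq by auto.
    pose proof (realizes_bound _ _ HF k x). nra.
  - intros k. rewrite (realizes_at_0 _ _ HF). ring.
Qed.

Lemma realizable_Series (U : nat -> nat -> R) :
  (forall j, realizable (U j)) ->
  (forall k, exists X, forall j, U j k <= (/2) ^ S j * X) ->
  realizable (fun k => Series (fun j => U j k)).
Proof.
  intros HU Hdom.
  assert (HS : forall k, ex_series (fun j => U j k)).
  { intros k. destruct (Hdom k) as [X HX]. apply (ex_series_le_half_geom _ X).
    intros j. rewrite Rmult_comm. split; [apply realizable_nonneg, HU | apply HX]. }
  assert (HS2 : forall k, ex_series (fun j => 2 * U j k)).
  { intros k. apply (ex_series_scal_l 2 (fun j => U j k)), HS. }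
  destruct (choice _ HU) as [F HF].
  exists (fun k x => Series (fun j => F j k x)). split.
  - intros k x. apply (is_derive_Series (fun j => F j k) (fun j => F j (S k))
      (fun j => 2 * U j k) (fun j => 2 * U j (S k))); auto; intros j y; apply HF.
  - intros k x.
    assert (E : ex_series (fun j => Rabs (F j k x))).
    { apply (@ex_series_le R_AbsRing R_CompleteNormedModule _ (fun j => 2 * U j k)); auto.
      intros j. change (Rabs (Rabs (F j k x)) <= 2 * U j k). rewrite Rabs_Rabsolu. apply HF. }
    eapply Rle_trans; [apply Series_Rabs; auto|].
    rewrite <- Series_scal_l. apply Series_le; auto.
    intros j. split; [apply Rabs_pos | apply HF].
  - intros k. rewrite <- Series_scal_l. apply Series_ext. intros j. apply HF.
Qed.

Fixpoint prodseq (mu : nat -> R) (k : nat) : R :=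
  match k with O => 1 | S k => prodseq mu k * mu k end.

Lemma prodseq_pos mu k : (forall i, 0 < mu i) -> 0 < prodseq mu k.
Proof. intros H. induction k; simpl; [lra | apply Rmult_lt_0_compat; auto]. Qed.

Lemma prodseq_le mu nu k : (forall i, 0 < mu i) -> (forall i, mu i <= nu i) ->
  prodseq mu k <= prodseq nu k.
Proof.
  intros H1 H2. induction k; simpl; [lra|].
  pose proof (prodseq_pos mu k H1). apply Rmult_le_compat; auto; left; auto.
Qed.

Section LogConvex.
Variable mu : nat -> R.
Hypothesis mu_pos : forall i, 0 < mu i.
Hypothesis mu_incr : forall i, mu i <= mu (S i).

Lemma mu_le_mono a b : (a <= b)%nat -> mu a <= mu b.
Proof. induction 1; [lra | eapply Rle_trans; eauto]. Qed.

Lemma prodseq_pow_le_add j d : prodseq mu j * mu j ^ d <= prodseq mu (j + d).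
Proof.
  induction d; [rewrite Nat.add_0_r; simpl; lra|].
  rewrite Nat.add_succ_r. simpl.
  assert (mu j <= mu (j + d)%nat) by (apply mu_le_mono; lia).
  pose proof (prodseq_pos mu j mu_pos). pose proof (pow_lt _ d (mu_pos j)).
  apply Rle_trans with (prodseq mu (j + d) * mu j).
  - replace (prodseq mu j * (mu j * mu j ^ d)) with (prodseq mu j * mu j ^ d * mu j) by ring.
    apply Rmult_le_compat_r; auto. left; auto.
  - apply Rmult_le_compat_l; auto. left; apply prodseq_pos, mu_pos.
Qed.

Lemma prodseq_add_le_pow k d : prodseq mu (k + d) <= prodseq mu k * mu (k + d)%nat ^ d.
Proof.
  induction d; [rewrite Nat.add_0_r; simpl; lra|].
  rewrite Nat.add_succ_r. simpl.
  assert (mu (k + d)%nat <= mu (S (k + d))) by apply mu_incr.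
  assert (mu (k + d)%nat ^ d <= mu (S (k + d)) ^ d) by (apply pow_incr; split; auto; left; auto).
  pose proof (prodseq_pos mu k mu_pos). pose proof (prodseq_pos mu (k + d) mu_pos).
  pose proof (mu_pos (k + d)). pose proof (pow_lt _ d (mu_pos (k + d))).
  assert (prodseq mu (k + d) <= prodseq mu k * mu (S (k + d)) ^ d).
  { eapply Rle_trans; [apply IHd | apply Rmult_le_compat_l; lra]. }
  replace (prodseq mu k * (mu (S (k + d)) * mu (S (k + d)) ^ d))
    with (prodseq mu k * mu (S (k + d)) ^ d * mu (S (k + d))) by ring.
  apply Rmult_le_compat; lra.
Qed.

Lemma prodseq_mul_pow_le j k : prodseq mu j * mu j ^ k <= prodseq mu k * mu j ^ j.
Proof.
  destruct (Compare_dec.le_lt_dec j k) as [H|H].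
  - destruct (Nat.le_exists_sub j k H) as [d [-> _]].
    rewrite Nat.add_comm, pow_add. pose proof (prodseq_pow_le_add j d).
    pose proof (pow_lt _ j (mu_pos j)).
    replace (prodseq mu j * (mu j ^ j * mu j ^ d)) with (prodseq mu j * mu j ^ d * mu j ^ j) by ring.
    apply Rmult_le_compat_r; lra.
  - destruct (Nat.le_exists_sub k j ltac:(lia)) as [d [-> _]].
    rewrite Nat.add_comm. pose proof (prodseq_add_le_pow k d).
    rewrite pow_add. pose proof (pow_lt _ k (mu_pos (k + d))).
    replace (prodseq mu k * (mu (k + d)%nat ^ k * mu (k + d)%nat ^ d))
      with (prodseq mu k * mu (k + d)%nat ^ d * mu (k + d)%nat ^ k) by ring.
    apply Rmult_le_compat_r; lra.
Qed.

(* The sum over [j] of the geometric sequences [prodseq mu j * (mu j)^(k - j)], weighted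
   by [2^-(j+1)]: each term touches [prodseq mu] at [k = j] and lies below it elsewhere. *)
Lemma realizable_prodseq : exists V, realizable V /\
  forall k, (/2) ^ S k * prodseq mu k <= V k <= prodseq mu k.
Proof.
  set (c := fun j => (/2) ^ S j * (prodseq mu j / mu j ^ j)).
  assert (Hmuj : forall j, mu j ^ j <> 0) by (intros j; apply pow_nonzero, Rgt_not_eq, mu_pos).
  assert (Hc : forall j, 0 <= c j).
  { intros j. apply Rmult_le_pos; [apply pow_le; lra|].
    apply Rlt_le, Rdiv_lt_0_compat; [apply prodseq_pos, mu_pos | apply pow_lt, mu_pos]. }
  assert (Hterm : forall j k, 0 <= c j * mu j ^ k <= (/2) ^ S j * prodseq mu k).
  { intros j k. pose proof (prodseq_mul_pow_le j k). pose proof (pow_lt _ j (mu_pos j)).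
    assert (Hpos : 0 < (/2) ^ S j * (prodseq mu j * mu j ^ k)).
    { apply Rmult_lt_0_compat; [apply pow_lt; lra|].
      apply Rmult_lt_0_compat; [apply prodseq_pos, mu_pos | apply pow_lt, mu_pos]. }
    replace (c j * mu j ^ k) with ((/2) ^ S j * (prodseq mu j * mu j ^ k) / mu j ^ j)
      by (unfold c; field; auto).
    split; [apply Rlt_le, Rdiv_lt_0_compat; auto|].
    apply Rmult_le_reg_r with (mu j ^ j); auto. unfold Rdiv.
    rewrite Rmult_assoc, Rinv_l, Rmult_1_r by auto.
    rewrite (Rmult_assoc ((/2) ^ S j) (prodseq mu k)).
    apply Rmult_le_compat_l; [apply pow_le; lra | auto]. }
  assert (HS : forall k, ex_series (fun j => c j * mu j ^ k)).
  { intros k. apply (ex_series_le_half_geom _ (prodseq mu k)). intros j.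
    rewrite (Rmult_comm (prodseq mu k)). apply Hterm. }
  exists (fun k => Series (fun j => c j * mu j ^ k)). split; [|intros k; split].
  - apply realizable_Series.
    + intros j. apply realizable_scal; auto.
      apply realizable_geom. left; apply mu_pos.
    + intros k. exists (prodseq mu k). intros j. apply Hterm.
  - apply Rle_trans with (c k * mu k ^ k).
    + right. unfold c. field. auto.
    + apply (Series_ge_term (fun j => c j * mu j ^ k)); auto. intros j. apply Hterm.
  - apply Series_le_half_geom. intros j. rewrite (Rmult_comm (prodseq mu k)). apply Hterm.
Qed.
End LogConvex.

Definition dc_seq (M : nat -> R) (rho : R) (k : nat) : R := INR (fact k) * rho ^ k * M k.

Definition om_exponent (om : R -> R) (rho : R) (k : nat) : R := / rho * phi_star om (rho * INR k).
Definition om_seq (om : R -> R) (rho : R) (k : nat) : R := exp (om_exponent om rho k).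

Definition seq_beur (M V : nat -> R) : Prop := forall rho, 0 < rho -> dominated V (dc_seq M rho).
Definition seq_roum (M V : nat -> R) : Prop := exists rho, 0 < rho /\ dominated V (dc_seq M rho).
Definition seq_G_beur (V : nat -> R) : Prop := forall s, 0 < s -> seq_beur (Gev s) V.
Definition seq_G_roum (V : nat -> R) : Prop := exists s, 0 < s /\ seq_roum (Gev s) V.
Definition seq_om_beur (om : R -> R) (V : nat -> R) : Prop :=
  forall rho, 0 < rho -> dominated V (om_seq om rho).
Definition seq_om_roum (om : R -> R) (V : nat -> R) : Prop :=
  exists rho, 0 < rho /\ dominated V (om_seq om rho).

Lemma om_bounded_iff om K rho f : om_bounded om K rho f <->
  exists C, forall x k, K x -> Rabs (Derive_n f k x) <= C * om_seq om rho k.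
Proof.
  unfold om_bounded, om_seq, om_exponent.
  assert (E : forall k, exp (- / rho * phi_star om (rho * INR k))
                        = / exp (/ rho * phi_star om (rho * INR k)))
    by (intros k; rewrite <- exp_Ropp; f_equal; ring).
  split; intros [C HC]; exists C; intros x k Hx; specialize (HC x k Hx);
    pose proof (exp_pos (/ rho * phi_star om (rho * INR k))); rewrite E in *.
  - apply Rmult_le_reg_r with (/ exp (/ rho * phi_star om (rho * INR k))).
    + apply Rinv_0_lt_compat; auto.
    + rewrite Rmult_assoc, Rinv_r, Rmult_1_r by lra. auto.
  - apply Rmult_le_reg_r with (exp (/ rho * phi_star om (rho * INR k))); auto.
    rewrite Rmult_assoc, Rinv_l, Rmult_1_r by lra. auto.
Qed.

Definition origin (x : R) : Prop := 0 <= x <= 0.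

Lemma cpt_origin : cpt origin.
Proof. apply compact_P3. Qed.

Lemma origin_0 : origin 0.
Proof. unfold origin; lra. Qed.

Section Transfer.
Variables (V : nat -> R) (F : nat -> R -> R).
Hypothesis HF : realizes V F.

Lemma Rabs_Derive_n_at_0 k : Rabs (Derive_n (F 0%nat) k 0) = V k.
Proof.
  rewrite (realizes_Derive_n V F HF), (realizes_at_0 _ _ HF), Rabs_mult, Rabs_dcs_0.
  rewrite Rabs_pos_eq; [ring | apply (realizes_nonneg V F HF)].
Qed.

Lemma dominated_Derive_n_iff (N : nat -> R) (K : R -> Prop) : K 0 ->
  (exists C, forall x k, K x -> Rabs (Derive_n (F 0%nat) k x) <= C * N k) <-> dominated V N.
Proof.
  intros HK. split.
  - intros [C HC]. exists C. intros k. rewrite <- Rabs_Derive_n_at_0. auto.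
  - intros [C HC]. exists (2 * C). intros x k _.
    rewrite (realizes_Derive_n V F HF). eapply Rle_trans; [apply HF|].
    rewrite Rmult_assoc. apply Rmult_le_compat_l; [lra | apply HC].
Qed.

Lemma DCseminorm_finite_iff M K rho : K 0 ->
  DCseminorm_finite M K rho (F 0%nat) <-> dominated V (dc_seq M rho).
Proof.
  intros HK. rewrite <- (dominated_Derive_n_iff _ K HK). unfold DCseminorm_finite, dc_seq.
  split; intros [C HC]; exists C; auto.
Qed.

Lemma om_bounded_iff_dominated om K rho : K 0 ->
  om_bounded om K rho (F 0%nat) <-> dominated V (om_seq om rho).
Proof. intros HK. rewrite om_bounded_iff. apply dominated_Derive_n_iff, HK. Qed.

Lemma DCseminorm_finite_of_dominated M K rho :
  dominated V (dc_seq M rho) -> DCseminorm_finite M K rho (F 0%nat).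
Proof.
  intros H. apply (DCseminorm_finite_iff M (fun x => K x \/ x = 0) rho) in H; [|auto].
  destruct H as [C HC]. exists C. auto.
Qed.

Lemma om_bounded_of_dominated om K rho :
  dominated V (om_seq om rho) -> om_bounded om K rho (F 0%nat).
Proof.
  intros H. apply (om_bounded_iff_dominated om (fun x => K x \/ x = 0) rho) in H; [|auto].
  apply om_bounded_iff in H. apply om_bounded_iff. destruct H as [C HC]. exists C. auto.
Qed.

Lemma E_beur_realizes M : E_beur M (F 0%nat) <-> seq_beur M V.
Proof.
  split.
  - intros [_ H] rho Hr. apply (DCseminorm_finite_iff M origin); auto using origin_0, cpt_origin.
  - intros H. split; [apply (realizes_smooth V F HF)|].
    intros K _ rho Hr. apply DCseminorm_finite_of_dominated; auto.
Qed.

Lemma E_roum_realizes M : E_roum M (F 0%nat) <-> seq_roum M V.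
Proof.
  split.
  - intros [_ H]. destruct (H origin cpt_origin) as [rho [Hr HD]].
    exists rho. split; auto. apply (DCseminorm_finite_iff M origin); auto using origin_0.
  - intros [rho [Hr HD]]. split; [apply (realizes_smooth V F HF)|].
    intros K _. exists rho. split; auto. apply DCseminorm_finite_of_dominated; auto.
Qed.

Lemma E_G_beur_realizes : E_G_beur (F 0%nat) <-> seq_G_beur V.
Proof. split; intros H s Hs; apply E_beur_realizes; auto. Qed.

Lemma E_G_roum_realizes : E_G_roum (F 0%nat) <-> seq_G_roum V.
Proof.
  split.
  - intros [_ H]. destruct (H origin cpt_origin) as [s [Hs [rho [Hr HD]]]].
    exists s. split; auto. exists rho. split; auto.
    apply (DCseminorm_finite_iff _ origin); auto using origin_0.
  - intros [s [Hs [rho [Hr HD]]]]. split; [apply (realizes_smooth V F HF)|].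
    intros K _. exists s. split; auto. exists rho. split; auto.
    apply DCseminorm_finite_of_dominated; auto.
Qed.

Lemma E_om_beur_realizes om : E_om_beur om (F 0%nat) <-> seq_om_beur om V.
Proof.
  split.
  - intros [_ H] rho Hr. apply (om_bounded_iff_dominated om origin); auto using origin_0, cpt_origin.
  - intros H. split; [apply (realizes_smooth V F HF)|].
    intros K _ rho Hr. apply om_bounded_of_dominated; auto.
Qed.

Lemma E_om_roum_realizes om : E_om_roum om (F 0%nat) <-> seq_om_roum om V.
Proof.
  split.
  - intros [_ H]. destruct (H origin cpt_origin) as [rho [Hr HD]].
    exists rho. split; auto. apply (om_bounded_iff_dominated om origin); auto using origin_0.
  - intros [rho [Hr HD]]. split; [apply (realizes_smooth V F HF)|].
    intros K _. exists rho. split; auto. apply om_bounded_of_dominated; auto.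
Qed.
End Transfer.

Definition same_on_realizable (S1 S2 : (nat -> R) -> Prop) : Prop :=
  forall V, realizable V -> (S1 V <-> S2 V).

Lemma same_on_realizable_of_same_space (P1 P2 : (R -> R) -> Prop) (S1 S2 : (nat -> R) -> Prop) :
  (forall V F, realizes V F -> (P1 (F 0%nat) <-> S1 V)) ->
  (forall V F, realizes V F -> (P2 (F 0%nat) <-> S2 V)) ->
  same_space P1 P2 -> same_on_realizable S1 S2.
Proof. intros H1 H2 Hs V [F HF]. rewrite <- (H1 V F HF), <- (H2 V F HF). apply Hs. Qed.

Lemma exp_le a b : a <= b -> exp a <= exp b.
Proof. intros [H|H]; [left; apply exp_increasing; auto | subst; lra]. Qed.

Lemma exp_mul_INR (L : nat) x : exp (INR L * x) = exp x ^ L.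
Proof.
  induction L; [simpl; rewrite Rmult_0_l, exp_0; reflexivity|].
  rewrite S_INR, Rmult_plus_distr_r, Rmult_1_l, exp_plus, IHL. simpl. ring.
Qed.

Lemma pow_le_1 x k : 0 <= x <= 1 -> x ^ k <= 1.
Proof. intros H. rewrite <- (pow1 k). apply pow_incr. lra. Qed.

Lemma INR_S_pos j : 0 < INR (S j).
Proof. apply lt_0_INR; lia. Qed.

Lemma INR_lt_pow2 k : INR k < 2 ^ k.
Proof.
  induction k; [simpl; lra|]. rewrite S_INR. simpl.
  assert (1 <= 2 ^ k) by (apply pow_R1_Rle; lra). lra.
Qed.

Lemma Rpower_pos x y : 0 < Rpower x y.
Proof. apply exp_pos. Qed.

Lemma Rpower_1_base b : Rpower 1 b = 1.
Proof. unfold Rpower. rewrite ln_1, Rmult_0_r, exp_0. reflexivity. Qed.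

Lemma Rpower_ge_1 x y : 1 <= x -> 0 <= y -> 1 <= Rpower x y.
Proof. intros Hx Hy. rewrite <- (Rpower_O x) by lra. apply Rle_Rpower; auto. Qed.

Lemma Rpower_pow_l x n b : 0 < x -> Rpower (x ^ n) b = Rpower x b ^ n.
Proof.
  intros Hx. rewrite <- Rpower_pow by auto. rewrite <- Rpower_pow by apply Rpower_pos.
  rewrite !Rpower_mult. f_equal. ring.
Qed.

Lemma fact_pos k : 0 < INR (fact k).
Proof. apply INR_fact_lt_0. Qed.

Lemma fact_ge_1 k : 1 <= INR (fact k).
Proof. pose proof (lt_O_fact k). apply (le_INR 1). lia. Qed.

Lemma INR_fact_le a b : (a <= b)%nat -> INR (fact a) <= INR (fact b).
Proof. intros H. apply le_INR, fact_le, H. Qed.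

Lemma Rpower_fact_le k a b : a <= b -> Rpower (INR (fact k)) a <= Rpower (INR (fact k)) b.
Proof. intros; apply Rle_Rpower; auto; apply fact_ge_1. Qed.

Lemma Rpower_fact_1_plus k a : Rpower (INR (fact k)) (1 + a) = INR (fact k) * Rpower (INR (fact k)) a.
Proof. rewrite Rpower_plus, Rpower_1 by apply fact_pos. reflexivity. Qed.

Lemma bounded_of_eventually_bounded (u : nat -> R) (N : nat) (B : R) :
  (forall n, (N <= n)%nat -> u n <= B) -> exists C, forall n, u n <= C.
Proof.
  revert B. induction N as [|N IH]; intros B H; [exists B; intros n; apply H; lia|].
  apply (IH (Rmax B (u N))). intros n Hn. destruct (Nat.eq_dec n N) as [->|]; [apply Rmax_r|].
  eapply Rle_trans; [apply H; lia | apply Rmax_l].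
Qed.

Lemma pow_le_fact (A : R) : exists C, 0 < C /\ forall k, A ^ k <= C * INR (fact k).
Proof.
  destruct (cv_speed_pow_fact (Rabs A) 1 ltac:(lra)) as [N HN].
  destruct (bounded_of_eventually_bounded (fun k => Rabs A ^ k / INR (fact k)) N 1) as [C HC].
  { intros n Hn. specialize (HN n Hn). unfold Rdist in HN. rewrite Rminus_0_r in HN.
    pose proof (Rle_abs (Rabs A ^ n / INR (fact n))). lra. }
  exists (Rmax C 1). split; [apply Rlt_le_trans with 1; [lra | apply Rmax_r]|].
  intros k. eapply Rle_trans; [apply Rle_abs|]. rewrite <- RPow_abs.
  specialize (HC k). pose proof (fact_pos k).
  apply Rle_trans with (C * INR (fact k)).
  - apply (Rmult_le_compat_r (INR (fact k))) in HC; [|lra].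
    unfold Rdiv in HC. rewrite Rmult_assoc, Rinv_l, Rmult_1_r in HC; lra.
  - apply Rmult_le_compat_r; [lra | apply Rmax_l].
Qed.

Lemma pow_le_Rpower_fact (eps A : R) : 0 < eps ->
  exists C, 0 < C /\ forall k, A ^ k <= C * Rpower (INR (fact k)) eps.
Proof.
  intros He. destruct (INR_archimed eps 1 He) as [m Hm].
  assert (HmR : 0 < INR m) by (destruct m; [simpl in Hm; lra | apply INR_S_pos]).
  destruct (pow_le_fact (Rabs A ^ m)) as [C1 [HC1 H1]].
  set (C0 := Rmax C1 1). assert (HC0 : 1 <= C0) by apply Rmax_r.
  assert (H0 : forall k, (Rabs A ^ m) ^ k <= C0 * INR (fact k)).
  { intros k. eapply Rle_trans; [apply H1|].
    apply Rmult_le_compat_r; [left; apply fact_pos | apply Rmax_l]. }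
  exists (Rpower C0 (/ INR m)). split; [apply Rpower_pos|].
  intros k. eapply Rle_trans; [apply Rle_abs|]. rewrite <- RPow_abs.
  destruct (Req_dec (Rabs A) 0) as [HA|HA].
  { rewrite HA. destruct k; [rewrite pow_O|].
    - pose proof (Rpower_ge_1 C0 (/ INR m) HC0 ltac:(left; apply Rinv_0_lt_compat; auto)).
      pose proof (Rpower_ge_1 (INR (fact 0)) eps (fact_ge_1 0) ltac:(lra)). nra.
    - rewrite pow_ne_zero by lia. apply Rmult_le_pos; left; apply Rpower_pos. }
  assert (HAp : 0 < Rabs A) by (pose proof (Rabs_pos A); lra).
  assert (E : Rabs A ^ k = Rpower ((Rabs A ^ k) ^ m) (/ INR m)).
  { rewrite <- (Rpower_pow m (Rabs A ^ k)) by (apply pow_lt; auto).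
    rewrite Rpower_mult, Rinv_r, Rpower_1 by (try lra; apply pow_lt; auto). reflexivity. }
  rewrite E, <- pow_mult, Nat.mul_comm, pow_mult.
  apply Rle_trans with (Rpower (C0 * INR (fact k)) (/ INR m)).
  - apply Rle_Rpower_l; [left; apply Rinv_0_lt_compat; auto|].
    split; [apply pow_lt, pow_lt; auto | apply H0].
  - rewrite <- Rpower_mult_distr; [|lra | apply fact_pos].
    apply Rmult_le_compat_l; [left; apply Rpower_pos|].
    apply Rpower_fact_le. apply Rmult_le_reg_l with (INR m); auto. rewrite Rinv_r by lra. lra.
Qed.

Lemma fact_beats_geom (A C : R) : 0 <= A -> exists k, C * A ^ k < INR (fact k).
Proof.
  intros HA. destruct (pow_le_fact (2 * A)) as [C0 [HC0 H0]].
  destruct (INR_archimed 1 (Rabs C * C0) ltac:(lra)) as [k Hk]. exists k.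
  specialize (H0 k). rewrite Rpow_mult_distr in H0.
  pose proof (INR_lt_pow2 k). pose proof (pos_INR k). pose proof (pow_le A k HA). pose proof (fact_pos k).
  pose proof (Rabs_pos C). pose proof (Rle_abs C).
  apply Rle_lt_trans with (Rabs C * A ^ k); [apply Rmult_le_compat_r; auto|].
  apply Rmult_lt_reg_l with (2 ^ k); [lra|].
  apply Rle_lt_trans with (Rabs C * (C0 * INR (fact k))).
  { replace (2 ^ k * (Rabs C * A ^ k)) with (Rabs C * (2 ^ k * A ^ k)) by ring.
    apply Rmult_le_compat_l; auto. }
  replace (Rabs C * (C0 * INR (fact k))) with (Rabs C * C0 * INR (fact k)) by ring.
  apply Rmult_lt_compat_r; lra.
Qed.

Lemma fact_add_le a b : (fact (a + b) <= fact a * (a + b) ^ b)%nat.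
Proof.
  induction b; [rewrite Nat.add_0_r; simpl; lia|].
  rewrite Nat.add_succ_r. simpl fact. simpl Nat.pow.
  assert ((a + b) ^ b <= S (a + b) ^ b)%nat by (apply Nat.pow_le_mono_l; lia).
  assert (A : (fact (a + b) <= fact a * S (a + b) ^ b)%nat).
  { eapply Nat.le_trans; [apply IHb | apply Nat.mul_le_mono_l; auto]. }
  apply (Nat.mul_le_mono_l _ _ (S (a + b))) in A. simpl in A. lia.
Qed.

Lemma fact_mul_le L q : (fact (L * q) <= L ^ (L * q) * fact q ^ L)%nat.
Proof.
  induction q; [rewrite Nat.mul_0_r; simpl; rewrite Nat.pow_1_l; lia|].
  replace (L * S q)%nat with (L * q + L)%nat by lia.
  eapply Nat.le_trans; [apply fact_add_le|].
  replace (L * q + L)%nat with (L * S q)%nat by lia.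
  change (fact (S q)) with (S q * fact q)%nat.
  rewrite !Nat.pow_mul_l.
  replace (L * S q)%nat with (L * q + L)%nat by lia. rewrite Nat.pow_add_r.
  apply (Nat.mul_le_mono_r _ _ (L ^ L * S q ^ L)%nat) in IHq.
  eapply Nat.le_trans; [exact IHq | apply Nat.eq_le_incl; ring].
Qed.

Lemma fact_mul_S_le L j : INR (fact (L * S j)) <= ((2 * INR L) ^ S j * INR (fact j)) ^ L.
Proof.
  apply Rle_trans with (INR L ^ (L * S j) * INR (fact (S j)) ^ L).
  { rewrite <- !pow_INR, <- mult_INR. apply le_INR, fact_mul_le. }
  replace (L * S j)%nat with (S j * L)%nat by lia.
  rewrite pow_mult, <- Rpow_mult_distr. apply pow_incr. split.
  { apply Rmult_le_pos; [apply pow_le, pos_INR | left; apply fact_pos]. }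
  apply Rle_trans with (INR L ^ S j * (2 ^ S j * INR (fact j))).
  - apply Rmult_le_compat_l; [apply pow_le, pos_INR|]. rewrite fact_simpl, mult_INR.
    apply Rmult_le_compat_r; [left; apply fact_pos | left; apply INR_lt_pow2].
  - right. rewrite Rpow_mult_distr. ring.
Qed.

Lemma div_bounds L m : (0 < L)%nat -> (L * (m / L) <= m /\ m < L * S (m / L))%nat.
Proof.
  intros HL. pose proof (Nat.div_mod m L ltac:(lia)).
  pose proof (Nat.mod_upper_bound m L ltac:(lia)). lia.
Qed.

Definition gev_seq (c b : R) (k : nat) : R := c ^ k * Rpower (INR (fact k)) b.

Definition gev_factor (c b : R) (i : nat) : R := c * Rpower (INR (S i)) b.

Lemma prodseq_ext_lt mu nu k : (forall i, (i < k)%nat -> mu i = nu i) -> prodseq mu k = prodseq nu k.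
Proof.
  induction k; intros H; simpl; [auto|].
  rewrite IHk, (H k) by (try intros; try apply H; lia). reflexivity.
Qed.

Section GevFactor.
Variables (c b : R).
Hypotheses (Hc : 0 < c) (Hb : 0 <= b).

Lemma gev_factor_pos i : 0 < gev_factor c b i.
Proof. apply Rmult_lt_0_compat; [auto | apply Rpower_pos]. Qed.

Lemma gev_factor_le i i' : (i <= i')%nat -> gev_factor c b i <= gev_factor c b i'.
Proof.
  intros Hi. apply Rmult_le_compat_l; [lra|]. apply Rle_Rpower_l; auto.
  split; [apply INR_S_pos | apply le_INR; lia].
Qed.

Lemma prodseq_gev_factor k : prodseq (gev_factor c b) k = gev_seq c b k.
Proof.
  unfold gev_seq. induction k; simpl prodseq.
  - simpl. rewrite Rpower_1_base. ring.
  - rewrite IHk. unfold gev_factor. rewrite fact_simpl, mult_INR.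
    rewrite <- (Rpower_mult_distr (INR (S k)) (INR (fact k))) by (apply INR_S_pos || apply fact_pos).
    simpl. ring.
Qed.

Lemma realizable_gev : exists V, realizable V /\
  forall k, (/2) ^ S k * gev_seq c b k <= V k <= gev_seq c b k.
Proof.
  destruct (realizable_prodseq (gev_factor c b) gev_factor_pos
             (fun i => gev_factor_le i (S i) (Nat.le_succ_diag_r i))) as [V [HV HB]].
  exists V. split; auto. intros k. rewrite <- prodseq_gev_factor. apply HB.
Qed.

Lemma realizable_gev_trunc K : exists V, realizable V /\
  (forall k, (k <= S K)%nat -> (/2) ^ S k * gev_seq c b k <= V k) /\
  (forall k, V k <= gev_factor c b K ^ k) /\
  (forall k, V k <= gev_seq c b k).
Proof.
  set (mu := fun i => gev_factor c b (Nat.min i K)).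
  assert (Hmu : forall i, 0 < mu i) by (intros i; apply gev_factor_pos).
  assert (Hincr : forall i, mu i <= mu (S i)) by (intros i; apply gev_factor_le; lia).
  destruct (realizable_prodseq mu Hmu Hincr) as [V [HV HB]].
  exists V. split; [auto|]. split; [|split]; intros k.
  - intros Hk. rewrite <- prodseq_gev_factor.
    rewrite (prodseq_ext_lt (gev_factor c b) mu)
      by (intros i Hi; unfold mu; rewrite Nat.min_l by lia; auto).
    apply HB.
  - eapply Rle_trans; [apply HB|]. clear HB. induction k; simpl; [lra|].
    pose proof (prodseq_pos _ k Hmu). pose proof (Hmu k).
    rewrite Rmult_comm. apply Rmult_le_compat; try lra. apply gev_factor_le. lia.
  - eapply Rle_trans; [apply HB|]. rewrite <- prodseq_gev_factor.
    apply prodseq_le; auto. intros i. apply gev_factor_le. lia.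
Qed.
End GevFactor.

Lemma realizable_fact_pow (b : R) : 0 <= b -> exists V, realizable V /\
  forall k, (/2) ^ S k * Rpower (INR (fact k)) b <= V k <= Rpower (INR (fact k)) b.
Proof.
  intros Hb. destruct (realizable_gev 1 b ltac:(lra) Hb) as [V [HV HB]]. exists V. split; auto.
  intros k. specialize (HB k). unfold gev_seq in HB. rewrite pow1, !Rmult_1_l in HB. apply HB.
Qed.

Lemma not_seq_G_beur V b : 1 < b -> (forall k, (/2) ^ S k * Rpower (INR (fact k)) b <= V k) ->
  ~ seq_G_beur V.
Proof.
  intros Hb HV HS.
  set (s := (b - 1) / 2). assert (Hs : 0 < s) by (unfold s; lra).
  destruct (HS s Hs 1 ltac:(lra)) as [C HC].
  destruct (pow_le_Rpower_fact s 4 Hs) as [E [HE0 HE]].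
  destruct (INR_archimed 1 (2 * Rabs C * E) ltac:(lra)) as [k Hk].
  specialize (HC k). specialize (HV k). specialize (HE k). unfold dc_seq, Gev in HC.
  rewrite pow1, Rmult_1_r in HC.
  assert (Eb : Rpower (INR (fact k)) b = INR (fact k) * Rpower (INR (fact k)) s * Rpower (INR (fact k)) s).
  { rewrite <- (Rpower_1 (INR (fact k))) at 2 by apply fact_pos.
    rewrite Rmult_assoc, <- !Rpower_plus. f_equal. unfold s; field. }
  pose proof (fact_pos k). pose proof (Rpower_pos (INR (fact k)) s).
  assert (Hsmall : (/2) ^ S k * Rpower (INR (fact k)) s <= Rabs C).
  { apply Rmult_le_reg_r with (INR (fact k) * Rpower (INR (fact k)) s); [apply Rmult_lt_0_compat; auto|].
    apply Rle_trans with ((/2) ^ S k * Rpower (INR (fact k)) b); [right; rewrite Eb; ring|].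
    eapply Rle_trans; [apply HV|]. eapply Rle_trans; [apply HC|].
    apply Rmult_le_compat_r; [left; apply Rmult_lt_0_compat; auto | apply Rle_abs]. }
  assert (H4 : 4 ^ k * (/2) ^ S k <= E * Rabs C).
  { apply Rle_trans with (E * Rpower (INR (fact k)) s * (/2) ^ S k).
    - apply Rmult_le_compat_r; auto. apply pow_le; lra.
    - rewrite Rmult_assoc. apply Rmult_le_compat_l; lra. }
  replace (4 ^ k * (/2) ^ S k) with (2 ^ k / 2) in H4.
  2: { replace 4 with (2 * 2) by ring. rewrite Rpow_mult_distr. simpl. rewrite pow_inv.
       field. apply pow_nonzero; lra. }
  pose proof (Rabs_pos C). pose proof (INR_lt_pow2 k). lra.
Qed.

Lemma seq_G_roum_fact_pow V n : (forall k, V k <= INR (fact k) ^ S (S n)) -> seq_G_roum V.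
Proof.
  intros HV. exists (INR (S n)). split; [apply INR_S_pos|]. exists 1. split; [lra|].
  exists 1. intros k. unfold dc_seq, Gev. rewrite pow1, Rmult_1_r, Rmult_1_l.
  eapply Rle_trans; [apply HV|]. rewrite <- Rpower_pow by apply fact_pos.
  replace (INR (S (S n))) with (1 + INR (S n)) by (rewrite (S_INR (S n)); ring).
  rewrite Rpower_fact_1_plus. lra.
Qed.

Lemma realizable_fact_pow_nat n : exists V, realizable V /\ seq_G_roum V /\
  forall k, (/2) ^ S k * INR (fact k) ^ S (S n) <= V k.
Proof.
  destruct (realizable_fact_pow (INR (S (S n))) (pos_INR _)) as [V [HV HB]].
  exists V. split; [auto|].
  assert (E : forall k, Rpower (INR (fact k)) (INR (S (S n))) = INR (fact k) ^ S (S n))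
    by (intros k; apply Rpower_pow, fact_pos).
  split; [apply (seq_G_roum_fact_pow _ n) |]; intros k; rewrite <- E; apply HB.
Qed.

Lemma dominated_pow_mul_dc_seq (B : R) (M : nat -> R) (rho : R) : 0 < rho -> (forall k, 0 <= M k) ->
  dominated (fun k => B ^ k * M k) (dc_seq M rho).
Proof.
  intros Hr HM. destruct (pow_le_fact (B / rho)) as [D [HD0 HD]]. exists D. intros k.
  specialize (HD k). unfold Rdiv in HD. rewrite Rpow_mult_distr, pow_inv in HD.
  pose proof (pow_lt rho k Hr). unfold dc_seq.
  replace (B ^ k * M k) with (B ^ k * / rho ^ k * M k * rho ^ k) by (field; lra).
  replace (D * (INR (fact k) * rho ^ k * M k)) with (D * INR (fact k) * M k * rho ^ k) by ring.
  apply Rmult_le_compat_r; [lra|]. apply Rmult_le_compat_r; auto.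
Qed.

Definition beta (j : nat) : R := 1 + / INR (S j).

Lemma beta_gt_1 j : 1 < beta j.
Proof. unfold beta. pose proof (Rinv_0_lt_compat _ (INR_S_pos j)). lra. Qed.

(* A bound for the [j]-th summand of the diagonal sequence which, for [j] large, fits
   into any [G^s]-Beurling bound. *)
Definition tail_seq (j k : nat) : R :=
  INR (fact k) * (/ INR (S j)) ^ k * Rpower (INR (fact k)) (2 / INR (S j)).

Lemma inv_INR_S_le_1 j : 0 <= / INR (S j) <= 1.
Proof.
  pose proof (INR_S_pos j). split; [left; apply Rinv_0_lt_compat; auto|].
  rewrite <- Rinv_1. apply Rinv_le_contravar; [lra|]. rewrite S_INR. pose proof (pos_INR j). lra.
Qed.

Lemma tail_seq_le j k : tail_seq j k <= INR (fact k) * Rpower (INR (fact k)) 2.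
Proof.
  unfold tail_seq. pose proof (fact_pos k). pose proof (inv_INR_S_le_1 j).
  apply Rmult_le_compat; [apply Rmult_le_pos; [lra | apply pow_le; lra] | left; apply Rpower_pos | |].
  - rewrite <- (Rmult_1_r (INR (fact k))) at 2. apply Rmult_le_compat_l; [lra | apply pow_le_1; lra].
  - apply Rpower_fact_le. unfold Rdiv. lra.
Qed.

Lemma tail_seq_eventually_le s rho : 0 < s -> 0 < rho ->
  exists J, forall j k, (J <= j)%nat -> tail_seq j k <= dc_seq (Gev s) rho k.
Proof.
  intros Hs Hr.
  destruct (INR_archimed (Rmin s rho) 2 ltac:(apply Rmin_glb_lt; auto)) as [J HJ]. exists J.
  intros j k Hj.
  assert (HjJ : INR J <= INR (S j)) by (apply le_INR; lia).
  pose proof (Rmin_l s rho). pose proof (Rmin_r s rho). pose proof (INR_S_pos j).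
  assert (0 < Rmin s rho) by (apply Rmin_glb_lt; auto).
  assert (Hsr : 2 / INR (S j) <= s /\ / INR (S j) <= rho).
  { split; apply Rmult_le_reg_r with (INR (S j)); auto; unfold Rdiv;
      rewrite ?Rmult_assoc, Rinv_l, ?Rmult_1_r by lra; nra. }
  pose proof (inv_INR_S_le_1 j). unfold tail_seq, dc_seq, Gev.
  apply Rmult_le_compat; [| left; apply Rpower_pos | | apply Rpower_fact_le; tauto].
  - apply Rmult_le_pos; [left; apply fact_pos | apply pow_le; lra].
  - apply Rmult_le_compat_l; [left; apply fact_pos | apply pow_incr; lra].
Qed.

Lemma gev_seq_beta_le_tail (A : R) j :
  exists E, 0 < E /\ forall k, gev_seq A (beta j) k <= E * tail_seq j k.
Proof.
  pose proof (INR_S_pos j) as Hs.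
  destruct (pow_le_Rpower_fact (/ INR (S j)) (INR (S j) * A) (Rinv_0_lt_compat _ Hs)) as [E [HE0 HE]].
  exists E. split; auto. intros k. specialize (HE k).
  unfold gev_seq, tail_seq, beta.
  assert (HAk : A ^ k <= E * Rpower (INR (fact k)) (/ INR (S j)) * (/ INR (S j)) ^ k).
  { rewrite Rpow_mult_distr in HE.
    apply Rmult_le_reg_l with (INR (S j) ^ k); [apply pow_lt; auto|].
    replace (INR (S j) ^ k * (E * Rpower (INR (fact k)) (/ INR (S j)) * (/ INR (S j)) ^ k))
      with (E * Rpower (INR (fact k)) (/ INR (S j)) * (INR (S j) * / INR (S j)) ^ k)
      by (rewrite Rpow_mult_distr; ring).
    rewrite Rinv_r, pow1 by lra. lra. }
  rewrite Rpower_fact_1_plus.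
  replace (2 / INR (S j)) with (/ INR (S j) + / INR (S j)) by (field; lra).
  rewrite Rpower_plus.
  apply Rle_trans with (E * Rpower (INR (fact k)) (/ INR (S j)) * (/ INR (S j)) ^ k
                          * (INR (fact k) * Rpower (INR (fact k)) (/ INR (S j)))).
  - apply Rmult_le_compat_r; auto.
    apply Rmult_le_pos; [left; apply fact_pos | left; apply Rpower_pos].
  - right. ring.
Qed.

(* The diagonal sequence is [W = sum_j eps j * U j]: [U j] is a Gevrey sequence of
   order [beta j > 1] (so not in [G^s]-Beurling classes for small [s]) frozen beyond the
   index [kk j] where it beats [(j+1) N j]; the weights [eps j] make the tails summable
   into every [G^s]-Beurling class. *)
Section BeurlingDiagonal.
Variables (H : nat -> R) (N : nat -> nat -> R) (E : nat -> R) (kk : nat -> nat) (U : nat -> nat -> R).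
Hypotheses (HH : forall j, 0 < H j) (HN : forall j k, 0 < N j k) (HE0 : forall j, 0 < E j).

Let A j := 2 / H j.
Let eps j := (/2) ^ S j / E j.

Hypothesis HE : forall j k, gev_seq (A j) (beta j) k <= E j * tail_seq j k.
Hypothesis Hkk : forall j,
  2 * INR (S j) / eps j * (H j ^ kk j * N j (kk j)) < Rpower (INR (fact (kk j))) (beta j).
Hypothesis HU : forall j, realizable (U j).
Hypothesis HU_low : forall j k, (k <= S (kk j))%nat -> (/2) ^ S k * gev_seq (A j) (beta j) k <= U j k.
Hypothesis HU_geom : forall j k, U j k <= gev_factor (A j) (beta j) (kk j) ^ k.
Hypothesis HU_up : forall j k, U j k <= gev_seq (A j) (beta j) k.

Lemma beur_diag_weight_pos j : 0 < eps j.
Proof. apply Rdiv_lt_0_compat; [apply pow_lt; lra | apply HE0]. Qed.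

Lemma beur_diag_term_nonneg j k : 0 <= eps j * U j k.
Proof. apply Rmult_le_pos; [left; apply beur_diag_weight_pos | apply realizable_nonneg, HU]. Qed.

Lemma beur_diag_term_le_tail j k : eps j * U j k <= (/2) ^ S j * tail_seq j k.
Proof.
  apply Rle_trans with (eps j * (E j * tail_seq j k)).
  - apply Rmult_le_compat_l; [left; apply beur_diag_weight_pos|].
    eapply Rle_trans; [apply HU_up | apply HE].
  - right. unfold eps. field. apply Rgt_not_eq, HE0.
Qed.

Lemma beur_diag_term_le_fact j k : eps j * U j k <= (/2) ^ S j * (INR (fact k) * Rpower (INR (fact k)) 2).
Proof.
  eapply Rle_trans; [apply beur_diag_term_le_tail|].
  apply Rmult_le_compat_l; [apply pow_le; lra | apply tail_seq_le].
Qed.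

Lemma beur_diag_realizable : realizable (fun k => Series (fun j => eps j * U j k)).
Proof.
  apply realizable_Series.
  - intros j. apply realizable_scal; [left; apply beur_diag_weight_pos | apply HU].
  - intros k. exists (INR (fact k) * Rpower (INR (fact k)) 2). intros j. apply beur_diag_term_le_fact.
Qed.

Lemma beur_diag_G_beur : seq_G_beur (fun k => Series (fun j => eps j * U j k)).
Proof.
  intros s Hs rho Hr. destruct (tail_seq_eventually_le s rho Hs Hr) as [J HJ].
  apply (dominated_Series _ _ J); auto using beur_diag_term_nonneg.
  - intros k. unfold dc_seq, Gev. apply Rmult_le_pos; [|left; apply Rpower_pos].
    apply Rmult_le_pos; [left; apply fact_pos | apply pow_le; lra].
  - intros j _. set (B := gev_factor (A j) (beta j) (kk j)).
    apply (dominated_le _ (fun k => eps j * (B ^ k * Gev s k))).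
    + intros k. apply Rmult_le_compat_l; [left; apply beur_diag_weight_pos|].
      eapply Rle_trans; [apply HU_geom|]. rewrite <- Rmult_1_r at 1.
      apply Rmult_le_compat_l.
      * apply pow_le. left. apply gev_factor_pos. unfold A. apply Rdiv_lt_0_compat; auto; lra.
      * apply Rpower_ge_1; [apply fact_ge_1 | lra].
    + destruct (dominated_pow_mul_dc_seq B (Gev s) rho Hr) as [C HC]; [intros; left; apply Rpower_pos|].
      exists (eps j * C). intros k. rewrite Rmult_assoc.
      apply Rmult_le_compat_l; [left; apply beur_diag_weight_pos | apply HC].
  - intros j k Hj. eapply Rle_trans; [apply beur_diag_term_le_tail|].
    apply Rmult_le_compat_l; [apply pow_le; lra | apply HJ, Hj].
Qed.

Lemma beur_diag_beats j : INR (S j) * N j (kk j) < Series (fun i => eps i * U i (kk j)).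
Proof.
  set (k := kk j).
  eapply Rlt_le_trans;
    [|apply (Series_ge_term (fun i => eps i * U i k) j); auto using beur_diag_term_nonneg].
  2: { apply (ex_series_le_half_geom _ (INR (fact k) * Rpower (INR (fact k)) 2)). intros i.
       rewrite (Rmult_comm _ ((/ 2) ^ S i)).
       split; [apply beur_diag_term_nonneg | apply beur_diag_term_le_fact]. }
  apply Rlt_le_trans with (eps j * ((/2) ^ S k * gev_seq (A j) (beta j) k)).
  2: { apply Rmult_le_compat_l; [left; apply beur_diag_weight_pos | apply HU_low; unfold k; lia]. }
  pose proof (Hkk j) as Hk. fold k in Hk.
  pose proof (pow_lt _ k (HH j)). pose proof (HN j k). pose proof (beur_diag_weight_pos j).
  assert (EA : (/2) ^ S k * A j ^ k = / 2 / H j ^ k).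
  { unfold A, Rdiv. rewrite Rpow_mult_distr, !pow_inv. simpl (_ ^ S k).
    field. repeat split; try apply pow_nonzero; try lra. pose proof (HH j); lra. }
  unfold gev_seq. rewrite <- (Rmult_assoc ((/2) ^ S k)), EA.
  apply Rmult_lt_reg_l with (2 * H j ^ k / eps j); [apply Rdiv_lt_0_compat; lra|].
  replace (2 * H j ^ k / eps j * (eps j * (/ 2 / H j ^ k * Rpower (INR (fact k)) (beta j))))
    with (Rpower (INR (fact k)) (beta j)) by (field; split; lra).
  eapply Rle_lt_trans; [|exact Hk]. right. field. lra.
Qed.
End BeurlingDiagonal.

Lemma realizable_G_beur_diag (H : nat -> R) (N : nat -> nat -> R) :
  (forall j, 0 < H j) -> (forall j k, 0 < N j k) ->
  (forall j, ~ dominated (fun k => Rpower (INR (fact k)) (beta j)) (fun k => H j ^ k * N j k)) ->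
  exists W, realizable W /\ seq_G_beur W /\ forall j, exists k, INR (S j) * N j k < W k.
Proof.
  intros HH HN Hdip.
  destruct (choice (fun j E => 0 < E /\ forall k, gev_seq (2 / H j) (beta j) k <= E * tail_seq j k))
    as [E HE]; [intros j; apply gev_seq_beta_le_tail|].
  destruct (choice (fun j k => 2 * INR (S j) / ((/2) ^ S j / E j) * (H j ^ k * N j k)
                               < Rpower (INR (fact k)) (beta j)))
    as [kk Hkk]; [intros j; apply (not_dominated_exists _ _ (Hdip j))|].
  destruct (choice (fun j U => realizable U /\
     (forall k, (k <= S (kk j))%nat -> (/2) ^ S k * gev_seq (2 / H j) (beta j) k <= U k) /\
     (forall k, U k <= gev_factor (2 / H j) (beta j) (kk j) ^ k) /\
     (forall k, U k <= gev_seq (2 / H j) (beta j) k))) as [U HU].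
  { intros j. apply realizable_gev_trunc.
    - apply Rdiv_lt_0_compat; auto; lra.
    - pose proof (beta_gt_1 j). lra. }
  exists (fun k => Series (fun j => (/2) ^ S j / E j * U j k)).
  split; [|split; [|intros j; exists (kk j)]].
  - eapply beur_diag_realizable; intros; apply HE || apply HU.
  - eapply beur_diag_G_beur; eauto; intros; apply HE || apply HU.
  - eapply beur_diag_beats; eauto; intros; apply HE || apply HU; auto.
Qed.

Section YoungConjugate.
Variable om : R -> R.
Hypothesis Hw : weight om.

Lemma phi_of_nonneg s : 0 <= phi_of om s.
Proof. destruct Hw as [_ [H _]]. apply H. left; apply exp_pos. Qed.

(* [phi] grows superlinearly because [log t = o(om t)]. *)
Lemma young_bounded t : 0 <= t -> exists B, forall s, 0 <= s -> s * t - phi_of om s <= B.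
Proof.
  intros Ht. destruct Hw as [_ [_ [_ [_ [_ [_ [Hlog _]]]]]]].
  destruct (Hlog (/ (t + 1)) ltac:(apply Rinv_0_lt_compat; lra)) as [T HT].
  set (T' := Rmax T 1).
  assert (HT' : 0 <= ln T') by (rewrite <- ln_1; apply ln_le; [lra | apply Rmax_r]).
  exists (t * ln T'). intros s Hs. pose proof (phi_of_nonneg s).
  destruct (Rle_dec T' (exp s)) as [Hle|Hlt].
  - assert (Hlog_s : Rabs (ln (exp s)) <= / (t + 1) * om (exp s))
      by (apply HT; eapply Rle_trans; [apply Rmax_l | exact Hle]).
    rewrite ln_exp, Rabs_pos_eq in Hlog_s by auto.
    assert ((t + 1) * s <= om (exp s)).
    { apply Rmult_le_reg_l with (/ (t + 1)); [apply Rinv_0_lt_compat; lra|].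
      rewrite <- Rmult_assoc, Rinv_l, Rmult_1_l by lra. auto. }
    unfold phi_of in *. assert (0 <= t * ln T') by (apply Rmult_le_pos; auto). nra.
  - assert (s <= ln T') by (rewrite <- (ln_exp s); apply ln_le; [apply exp_pos | lra]).
    nra.
Qed.

Let young_set (t : R) : R -> Prop := fun y => exists s, 0 <= s /\ y = s * t - phi_of om s.

Lemma Lub_Rbar_young_set t : 0 <= t -> Lub_Rbar (young_set t) = Finite (phi_star om t).
Proof.
  intros Ht. destruct (young_bounded t Ht) as [B HB].
  destruct (Lub_Rbar_correct (young_set t)) as [Hub Hl].
  unfold phi_star. fold (young_set t).
  destruct (Lub_Rbar (young_set t)) as [l| |]; simpl; auto; exfalso.
  - apply (Hl (Finite B)). intros x [s [Hs ->]]. simpl. apply HB; auto.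
  - apply (Hub (0 * t - phi_of om 0)). exists 0. split; [lra | reflexivity].
Qed.

Lemma phi_star_ge t s : 0 <= t -> 0 <= s -> s * t - phi_of om s <= phi_star om t.
Proof.
  intros Ht Hs. destruct (Lub_Rbar_correct (young_set t)) as [Hub _].
  rewrite Lub_Rbar_young_set in Hub by auto. apply Hub. exists s; auto.
Qed.

Lemma phi_star_le t B : 0 <= t -> (forall s, 0 <= s -> s * t - phi_of om s <= B) -> phi_star om t <= B.
Proof.
  intros Ht H. destruct (Lub_Rbar_correct (young_set t)) as [_ Hl].
  rewrite Lub_Rbar_young_set in Hl by auto. apply (Hl (Finite B)).
  intros x [s [Hs ->]]. simpl. auto.
Qed.

Lemma phi_star_le_mono t t' : 0 <= t -> t <= t' -> phi_star om t <= phi_star om t'.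
Proof.
  intros Ht Htt. apply phi_star_le; auto. intros s Hs.
  apply Rle_trans with (s * t' - phi_of om s); [nra | apply phi_star_ge; lra].
Qed.

(* [phi*(r' t) <= (r' / r) phi*(r t)] for [r' <= r], since [phi >= 0]. *)
Lemma om_seq_le_rho r r' k : 0 < r' -> r' <= r -> om_seq om r' k <= om_seq om r k.
Proof.
  intros Hr' Hrr. apply exp_le. unfold om_exponent. pose proof (pos_INR k).
  apply Rmult_le_reg_l with r'; auto. rewrite <- Rmult_assoc, Rinv_r, Rmult_1_l by lra.
  apply phi_star_le; [apply Rmult_le_pos; lra|]. intros s Hs.
  pose proof (phi_star_ge (r * INR k) s ltac:(apply Rmult_le_pos; lra) Hs).
  pose proof (phi_of_nonneg s).
  apply Rle_trans with (r' * / r * (s * (r * INR k) - phi_of om s)).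
  - replace (r' * / r * (s * (r * INR k) - phi_of om s))
      with (s * (r' * INR k) - r' / r * phi_of om s) by (field; lra).
    assert (r' / r <= 1).
    { unfold Rdiv. apply Rmult_le_reg_r with r; [lra|]. rewrite Rmult_assoc, Rinv_l by lra. lra. }
    nra.
  - rewrite Rmult_assoc. apply Rmult_le_compat_l; [lra|].
    apply Rmult_le_compat_l; [left; apply Rinv_0_lt_compat; lra | auto].
Qed.

Lemma om_seq_le_k r k k' : 0 < r -> (k <= k')%nat -> om_seq om r k <= om_seq om r k'.
Proof.
  intros Hr Hk. apply exp_le. unfold om_exponent.
  apply Rmult_le_compat_l; [left; apply Rinv_0_lt_compat; lra|].
  apply phi_star_le_mono; [apply Rmult_le_pos; [lra | apply pos_INR]|].
  apply Rmult_le_compat_l; [lra | apply le_INR; auto].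
Qed.
End YoungConjugate.

Lemma om_seq_INR_pow om (L k : nat) : (0 < L)%nat -> om_seq om (INR L) k ^ L = om_seq om 1 (L * k).
Proof.
  intros HL. assert (0 < INR L) by (apply lt_0_INR; auto).
  unfold om_seq, om_exponent. rewrite <- exp_mul_INR, mult_INR, Rinv_1, !Rmult_1_l.
  f_equal. field. lra.
Qed.

Lemma om_seq_inv_INR_mul om (L j : nat) : (0 < L)%nat -> om_seq om (/ INR L) (L * j) = om_seq om 1 j ^ L.
Proof.
  intros HL. assert (0 < INR L) by (apply lt_0_INR; auto).
  unfold om_seq, om_exponent. rewrite <- exp_mul_INR, mult_INR, Rinv_inv, Rinv_1, !Rmult_1_l.
  f_equal. f_equal. f_equal. field. lra.
Qed.

Lemma not_dominated_of_beats (W X : nat -> R) (N : nat -> nat -> R) :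
  (forall j, exists k, INR (S j) * N j k < W k) ->
  (exists j0, forall j k, (j0 <= j)%nat -> 0 <= X k <= N j k) -> ~ dominated W X.
Proof.
  intros Hb [j0 Hj0] [C HC].
  destruct (INR_archimed 1 C ltac:(lra)) as [j1 Hj1].
  destruct (Hb (Nat.max j0 j1)) as [k Hk].
  specialize (Hj0 (Nat.max j0 j1) k (Nat.le_max_l _ _)). specialize (HC k).
  assert (INR j1 <= INR (S (Nat.max j0 j1))) by (apply le_INR; lia).
  assert (C * X k <= INR (S (Nat.max j0 j1)) * X k) by (apply Rmult_le_compat_r; lra).
  assert (INR (S (Nat.max j0 j1)) * X k <= INR (S (Nat.max j0 j1)) * N (Nat.max j0 j1) k)
    by (apply Rmult_le_compat_l; [apply pos_INR | apply Hj0]).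
  lra.
Qed.

(* Every sequence [(k!)^(beta j)] lies outside the [G]-Beurling space, hence outside [S];
   the diagonal sequence lies inside it but escapes the bounds that define [S]. *)
Lemma not_same_G_beur (S : (nat -> R) -> Prop) (N : nat -> nat -> R) :
  (forall j k, 0 < N j k) ->
  (forall j V, (forall k, V k <= Rpower (INR (fact k)) (beta j)) -> ~ S V ->
     exists H, 0 < H /\ ~ dominated (fun k => Rpower (INR (fact k)) (beta j)) (fun k => H ^ k * N j k)) ->
  (forall W, S W -> exists X, dominated W X /\
     exists j0, forall j k, (j0 <= j)%nat -> 0 <= X k <= N j k) ->
  ~ same_on_realizable seq_G_beur S.
Proof.
  intros HN Hdip Hbound Heq.
  assert (HH : forall j, exists H, 0 < H /\
    ~ dominated (fun k => Rpower (INR (fact k)) (beta j)) (fun k => H ^ k * N j k)).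
  { intros j. pose proof (beta_gt_1 j).
    destruct (realizable_fact_pow (beta j)) as [V [HV HB]]; [lra|].
    apply (Hdip j V); [apply HB|]. intros HS. apply Heq in HS; auto.
    revert HS. apply (not_seq_G_beur V (beta j)); auto. apply HB. }
  destruct (choice _ HH) as [H HH'].
  destruct (realizable_G_beur_diag H N) as [W [HW [HG Hbeats]]]; try apply HH'; auto.
  destruct (Hbound W) as [X [HX Hj0]]; [apply Heq; auto|].
  exact (not_dominated_of_beats W X N Hbeats Hj0 HX).
Qed.

Lemma G_beur_neq_beur M : (forall k, 0 < M k) -> ~ same_on_realizable seq_G_beur (seq_beur M).
Proof.
  intros HM. apply (not_same_G_beur _ (fun _ k => INR (fact k) * M k)).
  - intros _ k. apply Rmult_lt_0_compat; [apply fact_pos | auto].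
  - intros j V HV HnS. apply Classical_Pred_Type.not_all_ex_not in HnS as [rho Hr].
    apply Classical_Prop.imply_to_and in Hr as [Hr Hn]. exists rho. split; auto.
    intros [C HC]. apply Hn. exists C. intros k. eapply Rle_trans; [apply HV|].
    eapply Rle_trans; [apply HC|]. right. unfold dc_seq. ring.
  - intros W HW. exists (dc_seq M 1). split; [apply HW; lra|]. exists O. intros j k _.
    unfold dc_seq. rewrite pow1, Rmult_1_r. pose proof (fact_pos k). pose proof (HM k).
    split; [nra | lra].
Qed.

Lemma G_beur_neq_roum M : (forall k, 0 < M k) -> ~ same_on_realizable seq_G_beur (seq_roum M).
Proof.
  intros HM. apply (not_same_G_beur _ (fun j => dc_seq M (INR (S j)))).
  - intros j k. unfold dc_seq. pose proof (fact_pos k). pose proof (pow_lt _ k (INR_S_pos j)).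
    pose proof (HM k). apply Rmult_lt_0_compat; [nra | auto].
  - intros j V HV HnS. exists 1. split; [lra|]. intros [C HC]. apply HnS.
    exists (INR (S j)). split; [apply INR_S_pos|]. exists C. intros k.
    eapply Rle_trans; [apply HV|]. eapply Rle_trans; [apply HC|]. rewrite pow1, Rmult_1_l. lra.
  - intros W [rho [Hr HW]]. exists (dc_seq M rho). split; auto.
    destruct (INR_archimed 1 rho ltac:(lra)) as [j0 Hj0]. exists j0. intros j k Hj.
    assert (rho <= INR (S j)) by (assert (INR j0 <= INR (S j)) by (apply le_INR; lia); lra).
    pose proof (fact_pos k). pose proof (HM k). pose proof (pow_le rho k ltac:(lra)). unfold dc_seq.
    split; [apply Rmult_le_pos; [nra | lra]|].
    apply Rmult_le_compat_r; [lra|]. apply Rmult_le_compat_l; [lra|]. apply pow_incr; lra.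
Qed.

(* With [j = k / L]: [k! <= ((2L)^(j+1) j!)^L] and [om_1(j)^L = om_{1/L}(L j) <= om_rho(k)]. *)
Lemma dominated_om_seq_of_fact_pow om (b rho : R) (L : nat) : weight om -> 0 <= b -> (0 < L)%nat ->
  / INR L <= rho ->
  dominated (fun k => Rpower (INR (fact k)) b) (fun k => (/ Rpower (2 * INR L) b) ^ k * om_seq om 1 k) ->
  dominated (fun k => Rpower (INR (fact k)) b) (om_seq om rho).
Proof.
  intros Hw Hb HL HLr [C HC].
  assert (HLR : 0 < INR L) by (apply lt_0_INR; auto).
  set (P := Rpower (2 * INR L) b). assert (HP : 0 < P) by apply Rpower_pos.
  set (C' := Rmax C 0). assert (HC' : 0 <= C') by apply Rmax_r.
  exists ((P * C') ^ L). intros k.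
  set (j := (k / L)%nat). destruct (div_bounds L k HL) as [Hj1 Hj2]. fold j in Hj1, Hj2.
  pose proof (fact_pos j) as Hfj. pose proof (exp_pos (om_exponent om 1 j)) as Hom.
  assert (Hfact : Rpower (INR (fact k)) b <= (P ^ S j * Rpower (INR (fact j)) b) ^ L).
  { assert (H2L : 0 < (2 * INR L) ^ S j) by (apply pow_lt; lra).
    unfold P. rewrite <- Rpower_pow_l, Rpower_mult_distr, <- Rpower_pow_l by
      (auto; lra || apply Rmult_lt_0_compat; auto).
    apply Rle_Rpower_l; auto. split; [apply fact_pos|].
    eapply Rle_trans; [apply INR_fact_le; apply Nat.lt_le_incl, Hj2 | apply fact_mul_S_le]. }
  assert (Hj : P ^ S j * Rpower (INR (fact j)) b <= P * C' * om_seq om 1 j).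
  { apply Rle_trans with (P ^ S j * (C' * ((/ P) ^ j * om_seq om 1 j))).
    - apply Rmult_le_compat_l; [apply pow_le; lra|]. eapply Rle_trans; [apply HC|].
      apply Rmult_le_compat_r; [|apply Rmax_l].
      apply Rmult_le_pos; [apply pow_le; left; apply Rinv_0_lt_compat; auto | left; apply exp_pos].
    - right. rewrite pow_inv. simpl. field. apply pow_nonzero. lra. }
  apply Rle_trans with ((P * C' * om_seq om 1 j) ^ L).
  - eapply Rle_trans; [apply Hfact|]. apply pow_incr. split; auto.
    apply Rmult_le_pos; [apply pow_le; lra | left; apply Rpower_pos].
  - rewrite Rpow_mult_distr, <- om_seq_inv_INR_mul by auto.
    apply Rmult_le_compat_l; [apply pow_le; apply Rmult_le_pos; lra|].
    eapply Rle_trans; [apply (om_seq_le_k om Hw); [apply Rinv_0_lt_compat|]; eauto|].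
    apply (om_seq_le_rho om Hw); auto. apply Rinv_0_lt_compat; auto.
Qed.

Lemma G_beur_neq_om_beur om : weight om -> ~ same_on_realizable seq_G_beur (seq_om_beur om).
Proof.
  intros Hw. apply (not_same_G_beur _ (fun _ => om_seq om 1)).
  - intros _ k. apply exp_pos.
  - intros j V HV HnS. apply Classical_Pred_Type.not_all_ex_not in HnS as [rho Hr].
    apply Classical_Prop.imply_to_and in Hr as [Hr Hn].
    destruct (INR_archimed rho 1 Hr) as [L0 HL0]. pose proof (INR_S_pos L0) as HL.
    exists (/ Rpower (2 * INR (S L0)) (beta j)). split; [apply Rinv_0_lt_compat, Rpower_pos|].
    intros Hd. apply Hn. apply (dominated_le _ _ _ HV).
    apply (dominated_om_seq_of_fact_pow om (beta j) rho (S L0)); auto;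
      [pose proof (beta_gt_1 j); lra | lia |].
    apply Rmult_le_reg_l with (INR (S L0)); auto. rewrite Rinv_r by lra. rewrite S_INR. nra.
  - intros W HW. exists (om_seq om 1). split; [apply HW; lra|].
    exists O. intros. split; [left; apply exp_pos | lra].
Qed.

Lemma G_beur_neq_om_roum om : weight om -> ~ same_on_realizable seq_G_beur (seq_om_roum om).
Proof.
  intros Hw. apply (not_same_G_beur _ (fun j => om_seq om (INR (S j)))).
  - intros j k. apply exp_pos.
  - intros j V HV HnS. exists 1. split; [lra|]. intros [C HC]. apply HnS.
    exists (INR (S j)). split; [apply INR_S_pos|]. exists C. intros k.
    eapply Rle_trans; [apply HV|]. eapply Rle_trans; [apply HC|]. rewrite pow1, Rmult_1_l. lra.
  - intros W [rho [Hr HW]]. exists (om_seq om rho). split; auto.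
    destruct (INR_archimed 1 rho ltac:(lra)) as [j0 Hj0]. exists j0. intros j k Hj.
    assert (rho <= INR (S j)) by (assert (INR j0 <= INR (S j)) by (apply le_INR; lia); lra).
    split; [left; apply exp_pos | apply (om_seq_le_rho om Hw); auto].
Qed.

(* The diagonal sequence is [W = sum_n del n * U n] with [U n ~ c n ^ k (k!)^(n+1)]: it
   contains Gevrey sequences of every order, so it lies in no [G^s]-Roumieu space, while
   the tiny weights [del n] keep it below any [Z] that dominates all of [U n / D n]. *)
Section RoumieuDiagonal.
Variables (c D : nat -> R) (U : nat -> nat -> R).
Hypotheses (Hc : forall n, 0 < c n) (HD : forall n, 0 < D n).
Hypothesis HU : forall n, realizable (U n).
Hypothesis HU_low : forall n k, (/2) ^ S k * (c n ^ k * INR (fact k) ^ S n) <= U n k.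
Hypothesis HU_up : forall n k, U n k <= c n ^ k * INR (fact k) ^ S n.

Let G n := Rmax (D n) 1 * ((1 + c n) ^ n * INR (fact n) ^ S n).
Let del n := (/2) ^ S n / G n.

Lemma roum_diag_scale_ge_1 n : 1 <= (1 + c n) ^ n * INR (fact n) ^ S n.
Proof.
  rewrite <- (Rmult_1_l 1). pose proof (Hc n).
  apply Rmult_le_compat; try lra; apply pow_R1_Rle; [lra | apply fact_ge_1].
Qed.

Lemma roum_diag_norm_pos n : 0 < G n.
Proof. pose proof (roum_diag_scale_ge_1 n). pose proof (Rmax_r (D n) 1). unfold G. nra. Qed.

Lemma roum_diag_weight_pos n : 0 < del n.
Proof. apply Rdiv_lt_0_compat; [apply pow_lt; lra | apply roum_diag_norm_pos]. Qed.

Lemma roum_diag_term_nonneg n k : 0 <= del n * U n k.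
Proof. apply Rmult_le_pos; [left; apply roum_diag_weight_pos | apply realizable_nonneg, HU]. Qed.

Lemma roum_diag_term_le n k : del n * U n k <= (/2) ^ S n * (c n ^ k * INR (fact k) ^ S n / G n).
Proof.
  apply Rle_trans with (del n * (c n ^ k * INR (fact k) ^ S n)).
  - apply Rmult_le_compat_l; [left; apply roum_diag_weight_pos | apply HU_up].
  - right. unfold del, Rdiv. ring.
Qed.

(* For [n >= k] the normalisation [G n] alone controls [c n ^ k (k!)^(n+1)]. *)
Lemma roum_diag_scale_dominates k : exists X, forall n,
  c n ^ k * INR (fact k) ^ S n <= X * ((1 + c n) ^ n * INR (fact n) ^ S n).
Proof.
  destruct (fin_max (fun n => c n ^ k * INR (fact k) ^ S n) k) as [B HB].
  exists (Rmax B 1). intros n. pose proof (Hc n). pose proof (roum_diag_scale_ge_1 n).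
  assert (0 <= c n ^ k) by (apply pow_le; lra).
  assert (0 <= INR (fact k) ^ S n) by (apply pow_le; left; apply fact_pos).
  destruct (Compare_dec.le_lt_dec k n) as [Hkn|Hkn].
  - apply Rle_trans with (1 * ((1 + c n) ^ n * INR (fact n) ^ S n)).
    + rewrite Rmult_1_l. apply Rmult_le_compat; auto.
      * apply Rle_trans with ((1 + c n) ^ k); [apply pow_incr; lra | apply Rle_pow; [lra | auto]].
      * apply pow_incr. split; [left; apply fact_pos | apply INR_fact_le; auto].
    + apply Rmult_le_compat_r; [lra | apply Rmax_r].
  - apply Rle_trans with (Rmax B 1 * 1).
    + rewrite Rmult_1_r. eapply Rle_trans; [apply HB; auto | apply Rmax_l].
    + apply Rmult_le_compat_l; [pose proof (Rmax_r B 1); lra | auto].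
Qed.

Lemma roum_diag_term_le_geom k : exists X, forall n, del n * U n k <= (/2) ^ S n * X.
Proof.
  destruct (roum_diag_scale_dominates k) as [X HX].
  exists (Rmax X 1). intros n. eapply Rle_trans; [apply roum_diag_term_le|].
  apply Rmult_le_compat_l; [apply pow_le; lra|].
  pose proof (roum_diag_norm_pos n). pose proof (roum_diag_scale_ge_1 n). pose proof (HX n).
  pose proof (Rmax_l X 1). pose proof (Rmax_r X 1). pose proof (Rmax_r (D n) 1).
  apply Rmult_le_reg_r with (G n); auto. unfold Rdiv.
  rewrite Rmult_assoc, Rinv_l, Rmult_1_r by lra. unfold G.
  set (P := (1 + c n) ^ n * INR (fact n) ^ S n) in *.
  assert (0 <= (Rmax (D n) 1 - 1) * (P * Rmax X 1)) by (apply Rmult_le_pos; nra).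
  nra.
Qed.

Lemma roum_diag_ex_series k : ex_series (fun n => del n * U n k).
Proof.
  destruct (roum_diag_term_le_geom k) as [X HX]. apply (ex_series_le_half_geom _ X).
  intros n. rewrite (Rmult_comm X). split; [apply roum_diag_term_nonneg | apply HX].
Qed.

Lemma roum_diag_realizable : realizable (fun k => Series (fun n => del n * U n k)).
Proof.
  apply realizable_Series; [|apply roum_diag_term_le_geom].
  intros n. apply realizable_scal; [left; apply roum_diag_weight_pos | apply HU].
Qed.

(* For [n > s + 1] and [k] large, the [n]-th summand alone exceeds [C k! rho^k (k!)^s]. *)
Lemma roum_diag_not_G_roum : ~ seq_G_roum (fun k => Series (fun n => del n * U n k)).
Proof.
  intros [s [Hs [rho [Hr [C HC]]]]].
  destruct (INR_archimed 1 (s + 1) ltac:(lra)) as [n Hn]. rewrite Rmult_1_r in Hn.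
  pose proof (roum_diag_weight_pos n). pose proof (Hc n).
  destruct (fact_beats_geom (2 * rho / c n) (Rabs C * 2 / del n)) as [k Hk].
  { apply Rlt_le, Rdiv_lt_0_compat; lra. }
  specialize (HC k). unfold dc_seq, Gev in HC.
  pose proof (fact_pos k). pose proof (Rpower_pos (INR (fact k)) s).
  pose proof (pow_lt _ k Hr). pose proof (pow_lt _ k (Hc n)).
  assert (Hpow : INR (fact k) * INR (fact k) * Rpower (INR (fact k)) s <= INR (fact k) ^ S n).
  { rewrite <- (Rpower_pow (S n) (INR (fact k))) by apply fact_pos.
    rewrite <- (Rpower_1 (INR (fact k))) at 1 2 by apply fact_pos.
    rewrite <- !Rpower_plus. apply Rpower_fact_le. rewrite S_INR. lra. }
  assert (Hlow : del n * ((/2) ^ S k * (c n ^ k * INR (fact k) ^ S n))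
                 <= Rabs C * (INR (fact k) * rho ^ k * Rpower (INR (fact k)) s)).
  { eapply Rle_trans; [apply Rmult_le_compat_l; [lra | apply HU_low]|].
    eapply Rle_trans; [apply (Series_ge_term (fun n => del n * U n k) n);
                       auto using roum_diag_ex_series, roum_diag_term_nonneg|].
    eapply Rle_trans; [apply HC|]. apply Rmult_le_compat_r; [|apply Rle_abs].
    apply Rmult_le_pos; [apply Rmult_le_pos|]; lra. }
  assert (Hden : 0 < del n * (/2) ^ S k * c n ^ k)
    by (apply Rmult_lt_0_compat; [apply Rmult_lt_0_compat; [|apply pow_lt]|]; lra).
  assert (Hlow' : del n * (/2) ^ S k * c n ^ k * INR (fact k) <= Rabs C * rho ^ k).
  { apply Rmult_le_reg_r with (INR (fact k) * Rpower (INR (fact k)) s); [nra|].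
    apply Rle_trans with (del n * (/2) ^ S k * c n ^ k * INR (fact k) ^ S n).
    - replace (del n * (/2) ^ S k * c n ^ k * INR (fact k) * (INR (fact k) * Rpower (INR (fact k)) s))
        with (del n * (/2) ^ S k * c n ^ k * (INR (fact k) * INR (fact k) * Rpower (INR (fact k)) s))
        by ring.
      apply Rmult_le_compat_l; lra.
    - eapply Rle_trans; [|eapply Rle_trans; [exact Hlow | right; ring]]. right; ring. }
  assert (E : Rabs C * 2 / del n * (2 * rho / c n) ^ k
              = Rabs C * rho ^ k / (del n * (/2) ^ S k * c n ^ k)).
  { unfold Rdiv. rewrite !Rpow_mult_distr, !pow_inv. simpl (2 ^ S k).
    field. repeat split; try lra; apply pow_nonzero; lra. }
  rewrite E in Hk. apply (Rmult_lt_compat_r (del n * (/2) ^ S k * c n ^ k)) in Hk; auto.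
  unfold Rdiv in Hk. rewrite Rmult_assoc, Rinv_l, Rmult_1_r in Hk by lra. lra.
Qed.

Lemma roum_diag_le (Z : nat -> R) : (forall n k, INR (fact k) ^ S n * c n ^ k <= D n * Z k) ->
  forall k, Series (fun n => del n * U n k) <= Z k.
Proof.
  intros HZ k. apply Series_le_half_geom. intros n. split; [apply roum_diag_term_nonneg|].
  eapply Rle_trans; [apply roum_diag_term_le|]. rewrite (Rmult_comm (Z k)).
  apply Rmult_le_compat_l; [apply pow_le; lra|].
  pose proof (roum_diag_norm_pos n). pose proof (roum_diag_scale_ge_1 n). pose proof (HD n).
  pose proof (Rmax_l (D n) 1). pose proof (Rmax_r (D n) 1).
  assert (HG : D n <= G n) by (unfold G; nra).
  apply Rmult_le_reg_r with (G n); auto. unfold Rdiv.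
  rewrite Rmult_assoc, Rinv_l, Rmult_1_r by lra. rewrite Rmult_comm. specialize (HZ n k).
  assert (0 <= Z k).
  { pose proof (pow_lt _ k (Hc n)). pose proof (pow_lt _ (S n) (fact_pos k)).
    apply Rmult_le_reg_l with (D n); nra. }
  eapply Rle_trans; [apply HZ|]. rewrite (Rmult_comm (Z k)). apply Rmult_le_compat_r; lra.
Qed.
End RoumieuDiagonal.

Lemma realizable_G_roum_diag (c D : nat -> R) : (forall n, 0 < c n) -> (forall n, 0 < D n) ->
  exists W, realizable W /\ ~ seq_G_roum W /\
   forall Z, (forall n k, INR (fact k) ^ S n * c n ^ k <= D n * Z k) -> forall k, W k <= Z k.
Proof.
  intros Hc HD.
  destruct (choice (fun n U => realizable U /\ forall k,
      (/2) ^ S k * (c n ^ k * INR (fact k) ^ S n) <= U k <= c n ^ k * INR (fact k) ^ S n)) as [U HU].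
  { intros n. destruct (realizable_gev (c n) (INR (S n)) (Hc n) (pos_INR _)) as [V [HV HB]].
    exists V. split; auto. intros k. unfold gev_seq in HB.
    rewrite <- (Rpower_pow (S n) (INR (fact k))) by apply fact_pos. apply HB. }
  exists (fun k => Series (fun n =>
    (/2) ^ S n / (Rmax (D n) 1 * ((1 + c n) ^ n * INR (fact n) ^ S n)) * U n k)).
  split; [|split].
  - apply roum_diag_realizable; auto; apply HU.
  - apply roum_diag_not_G_roum; auto; apply HU.
  - apply roum_diag_le; auto; apply HU.
Qed.

Lemma fact_pow_le_of_roum M : (forall k, 0 < M k) ->
  (forall V, realizable V -> seq_G_roum V -> seq_roum M V) ->
  exists c D, (forall n, 0 < c n) /\ (forall n, 0 < D n) /\
    forall n k, INR (fact k) ^ S n * c n ^ k <= D n * M k.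
Proof.
  intros HM Hinc.
  assert (Hb : forall n, exists rC, 0 < fst rC /\ 0 < snd rC /\
    forall k, (/2) ^ S k * INR (fact k) ^ S (S n) <= snd rC * dc_seq M (fst rC) k).
  { intros n. destruct (realizable_fact_pow_nat n) as [V [HV [HG HB]]].
    destruct (Hinc V HV HG) as [rho [Hr [C HC]]].
    exists (rho, Rmax C 1). simpl. split; [auto | split; [pose proof (Rmax_r C 1); lra|]].
    intros k. eapply Rle_trans; [apply HB|]. eapply Rle_trans; [apply HC|].
    apply Rmult_le_compat_r; [|apply Rmax_l]. unfold dc_seq.
    pose proof (fact_pos k). pose proof (pow_lt _ k Hr). pose proof (HM k).
    apply Rmult_le_pos; [apply Rmult_le_pos|]; lra. }
  destruct (choice _ Hb) as [rC HrC].
  exists (fun n => / (2 * fst (rC n))), (fun n => 2 * snd (rC n)).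
  split; [|split]; [intros n; pose proof (HrC n); apply Rinv_0_lt_compat; lra
                  | intros n; pose proof (HrC n); lra|].
  intros n k. destruct (HrC n) as [Hr [HC HB]]. specialize (HB k).
  set (r := fst (rC n)) in *. set (C := snd (rC n)) in *.
  pose proof (fact_pos k). pose proof (pow_lt _ k Hr). pose proof (HM k).
  unfold dc_seq in HB.
  assert (E : INR (fact k) ^ S n * (/ (2 * r)) ^ k * (INR (fact k) * r ^ k / 2)
               = (/2) ^ S k * INR (fact k) ^ S (S n)).
  { change ((/2) ^ S k) with (/2 * (/2) ^ k).
    rewrite Rinv_mult, Rpow_mult_distr, !pow_inv.
    change (INR (fact k) ^ S (S n)) with (INR (fact k) * INR (fact k) ^ S n).
    field. split; apply pow_nonzero; lra. }
  apply Rmult_le_reg_r with (INR (fact k) * r ^ k / 2); [apply Rdiv_lt_0_compat; [nra | lra]|].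
  rewrite E. eapply Rle_trans; [apply HB|]. right. field.
Qed.

Lemma G_roum_neq_beur M : (forall k, 0 < M k) -> ~ same_on_realizable seq_G_roum (seq_beur M).
Proof.
  intros HM Heq.
  destruct (fact_pow_le_of_roum M HM) as [c [D [Hc [HD HcD]]]].
  { intros V HV HG. exists 1. split; [lra|]. apply Heq; auto; lra. }
  destruct (realizable_G_roum_diag c D Hc HD) as [W [HW [HnG HWZ]]].
  apply HnG, Heq; auto. intros rho Hr.
  apply (dominated_le _ (fun k => 1 ^ k * M k)); [intros k; rewrite pow1, Rmult_1_l; apply HWZ, HcD|].
  apply dominated_pow_mul_dc_seq; auto. intros k; left; auto.
Qed.

Lemma G_roum_neq_roum M : (forall k, 0 < M k) -> ~ same_on_realizable seq_G_roum (seq_roum M).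
Proof.
  intros HM Heq.
  destruct (fact_pow_le_of_roum M HM) as [c [D [Hc [HD HcD]]]]; [intros V HV; apply Heq; auto|].
  destruct (realizable_G_roum_diag c D Hc HD) as [W [HW [HnG HWZ]]].
  apply HnG, Heq; auto. exists 1. split; [lra|].
  apply (dominated_le _ (fun k => 1 ^ k * M k)); [intros k; rewrite pow1, Rmult_1_l; apply HWZ, HcD|].
  apply dominated_pow_mul_dc_seq; [lra|]. intros k; left; auto.
Qed.

Lemma fact_pow_half_le k n :
  INR (fact k) ^ S n * (/2) ^ k <= 2 * ((/2) ^ S k * INR (fact k) ^ S (S n)).
Proof.
  replace (2 * ((/2) ^ S k * INR (fact k) ^ S (S n)))
    with ((/2) ^ k * (INR (fact k) * INR (fact k) ^ S n)) by (simpl; field).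
  rewrite Rmult_comm. apply Rmult_le_compat_l; [apply pow_le; lra|].
  pose proof (fact_ge_1 k). assert (0 <= INR (fact k) ^ S n) by (apply pow_le; lra). nra.
Qed.

Lemma dominated_family (V : nat -> nat -> R) (Cn : nat -> R) (Y : nat -> R) (N0 : nat) :
  (forall k, 0 <= Y k) ->
  (forall n k, (N0 <= n)%nat -> V n k <= Cn n * Y k) -> (forall n, dominated (V n) Y) ->
  exists B, 1 <= B /\ forall n k, V n k <= Rmax (Cn n) 1 * (B * Y k).
Proof.
  intros HY Htail Hhead. destruct (choice _ Hhead) as [Cr HCr].
  destruct (fin_max Cr N0) as [Q HQ].
  exists (Rmax Q 1). split; [apply Rmax_r|]. intros n k.
  pose proof (HY k). pose proof (Rmax_r (Cn n) 1). pose proof (Rmax_r Q 1).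
  destruct (Compare_dec.le_lt_dec N0 n) as [Hn|Hn].
  - eapply Rle_trans; [apply Htail; auto|].
    apply Rle_trans with (Rmax (Cn n) 1 * Y k); [apply Rmult_le_compat_r; [lra | apply Rmax_l]|].
    rewrite <- (Rmult_1_l (Y k)) at 1. apply Rmult_le_compat_l; [lra|].
    apply Rmult_le_compat_r; lra.
  - eapply Rle_trans; [apply HCr|].
    apply Rle_trans with (Rmax Q 1 * Y k).
    + apply Rmult_le_compat_r; [lra|]. eapply Rle_trans; [apply HQ; auto | apply Rmax_l].
    + rewrite <- (Rmult_1_l (Rmax Q 1 * Y k)) at 1. apply Rmult_le_compat_r; [nra | lra].
Qed.

Lemma G_roum_neq_om_beur om : weight om -> ~ same_on_realizable seq_G_roum (seq_om_beur om).
Proof.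
  intros Hw Heq.
  destruct (choice (fun n V => realizable V /\ seq_G_roum V /\
    forall k, (/2) ^ S k * INR (fact k) ^ S (S n) <= V k)) as [VG HVG]; [apply realizable_fact_pow_nat|].
  assert (HO : forall n, seq_om_beur om (VG n)) by (intros n; apply Heq; apply HVG).
  destruct (choice (fun n C => 0 <= C /\ forall k, VG n k <= C * om_seq om (/ INR (S n)) k)) as [Cn HCn].
  { intros n. destruct (HO n (/ INR (S n))) as [C HC]; [apply Rinv_0_lt_compat, INR_S_pos|].
    exists (Rmax C 0). split; [apply Rmax_r|]. intros k. eapply Rle_trans; [apply HC|].
    apply Rmult_le_compat_r; [left; apply exp_pos | apply Rmax_l]. }
  destruct (realizable_G_roum_diag (fun _ => /2) (fun n => 2 * Rmax (Cn n) 1)) as [W [HW [HnG HWZ]]].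
  { intros; lra. }
  { intros n. pose proof (Rmax_r (Cn n) 1). lra. }
  apply HnG, Heq; auto. intros rho Hr.
  destruct (INR_archimed rho 1 Hr) as [N0 HN0].
  destruct (dominated_family VG Cn (om_seq om rho) N0) as [B [HB1 HB]].
  - intros k. left. apply exp_pos.
  - intros n k Hn. eapply Rle_trans; [apply HCn|]. apply Rmult_le_compat_l; [apply HCn|].
    apply (om_seq_le_rho om Hw); [apply Rinv_0_lt_compat, INR_S_pos|].
    assert (INR N0 <= INR (S n)) by (apply le_INR; lia). pose proof (INR_S_pos n).
    apply Rmult_le_reg_l with (INR (S n)); auto. rewrite Rinv_r by lra. nra.
  - intros n. apply HO, Hr.
  - exists B. apply (HWZ (fun k => B * om_seq om rho k)). intros n k'.
    eapply Rle_trans; [apply fact_pow_half_le|]. rewrite Rmult_assoc.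
    apply Rmult_le_compat_l; [lra|]. eapply Rle_trans; [apply HVG | apply HB].
Qed.

Ltac pos_tac := repeat (apply Rmult_lt_0_compat || apply pow_lt || apply Rinv_0_lt_compat); lra.

(* With [j = m / L]: [m! <= ((2L)^(j+1) j!)^L], and the factor [G^(j+1)] with
   [G = (2 (2L)^(p+1))^L] turns [(2L)^((j+1)(p+1)L)] into the [2^-(j+1)] of
   [a j = 2^-(j+1) (j!)^(p+2)]. *)
Lemma fact_pow_le_block (p L m : nat) : (0 < L)%nat ->
  INR (fact m) ^ S p <= ((2 * (2 * INR L) ^ S p) ^ L) ^ S m
                        * ((/2) ^ S (m / L) * INR (fact (m / L)) ^ S (S p)) ^ L.
Proof.
  intros HL. assert (HL1 : 1 <= INR L) by (apply (le_INR 1); lia).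
  set (u := 2 * INR L). assert (Hu : 1 <= u) by (unfold u; lra).
  set (G := (2 * u ^ S p) ^ L).
  assert (HG : 1 <= G) by (apply pow_R1_Rle; pose proof (pow_R1_Rle u (S p) Hu); lra).
  set (j := (m / L)%nat). destruct (div_bounds L m HL) as [Hj1 Hj2]. fold j in Hj1, Hj2.
  set (f := INR (fact j)). assert (Hf : 1 <= f) by apply fact_ge_1.
  assert (Hfact : INR (fact m) <= (u ^ S j * f) ^ L).
  { apply Rle_trans with (INR (fact (L * S j))); [apply INR_fact_le; lia | apply fact_mul_S_le]. }
  assert (EQ : G ^ S j * ((/2) ^ S j * f ^ S (S p)) ^ L = ((u ^ S j * f) ^ L) ^ S p * f ^ L).
  { apply ln_inv; unfold G; try pos_tac.
    repeat first [rewrite ln_mult by pos_tac | rewrite ln_pow by pos_tac].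
    rewrite ln_Rinv by lra. rewrite (S_INR (S p)). ring. }
  apply Rle_trans with (G ^ S j * ((/2) ^ S j * f ^ S (S p)) ^ L).
  - rewrite EQ, <- (Rmult_1_r (INR (fact m) ^ S p)).
    apply Rmult_le_compat; [apply pow_le; left; apply fact_pos | lra |
                            apply pow_incr; split; [left; apply fact_pos | auto] |
                            apply pow_R1_Rle; auto].
  - apply Rmult_le_compat_r; [left; pos_tac | apply Rle_pow; [auto | nia]].
Qed.

(* Raising [a k <= C om_rho(k)] to the power [L >= rho] at [k = m / L] bounds
   [a (m / L) ^ L] by [C^L om_1(m)]. *)
Lemma fact_pow_le_om_seq_1 om p rho C : weight om -> 0 < rho -> 0 < C ->
  (forall k, (/2) ^ S k * INR (fact k) ^ S (S p) <= C * om_seq om rho k) ->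
  exists c D, 0 < c /\ 0 < D /\ forall m, INR (fact m) ^ S p * c ^ m <= D * om_seq om 1 m.
Proof.
  intros Hw Hr HC Hk.
  destruct (INR_archimed 1 rho ltac:(lra)) as [L0 HL0]. rewrite Rmult_1_r in HL0.
  set (L := S L0). assert (HL : (0 < L)%nat) by (unfold L; lia).
  assert (HrL : rho <= INR L) by (unfold L; rewrite S_INR; lra).
  set (G := (2 * (2 * INR L) ^ S p) ^ L).
  assert (HG : 1 <= G).
  { apply pow_R1_Rle. assert (1 <= 2 * INR L) by (unfold L; rewrite S_INR; pose proof (pos_INR L0); lra).
    pose proof (pow_R1_Rle _ (S p) H). lra. }
  exists (/ G), (G * C ^ L). split; [apply Rinv_0_lt_compat; lra|].
  split; [apply Rmult_lt_0_compat; [lra | apply pow_lt; auto]|]. intros m.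
  set (a := fun k => (/2) ^ S k * INR (fact k) ^ S (S p)).
  assert (Ha : forall k, 0 < a k)
    by (intros k; apply Rmult_lt_0_compat; apply pow_lt; [lra | apply fact_pos]).
  assert (HaL : forall k, a k ^ L <= C ^ L * om_seq om 1 (L * k)).
  { intros k. rewrite <- om_seq_INR_pow, <- Rpow_mult_distr by auto.
    apply pow_incr. split; [left; apply Ha|]. eapply Rle_trans; [apply Hk|].
    apply Rmult_le_compat_l; [lra | apply (om_seq_le_rho om Hw); auto]. }
  set (j := (m / L)%nat). destruct (div_bounds L m HL) as [Hj _]. fold j in Hj.
  rewrite pow_inv.
  apply Rle_trans with (G ^ S m * a j ^ L * / G ^ m).
  { apply Rmult_le_compat_r; [left; apply Rinv_0_lt_compat, pow_lt; lra | apply fact_pow_le_block; auto]. }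
  replace (G ^ S m * a j ^ L * / G ^ m) with (G * a j ^ L) by (simpl; field; apply pow_nonzero; lra).
  rewrite Rmult_assoc. apply Rmult_le_compat_l; [lra|].
  eapply Rle_trans; [apply HaL|]. apply Rmult_le_compat_l; [apply pow_le; lra|].
  apply (om_seq_le_k om Hw); [lra | auto].
Qed.

Lemma G_roum_neq_om_roum om : weight om -> ~ same_on_realizable seq_G_roum (seq_om_roum om).
Proof.
  intros Hw Heq.
  assert (Hs : forall n, exists cD, 0 < fst cD /\ 0 < snd cD /\
    forall m, INR (fact m) ^ S n * fst cD ^ m <= snd cD * om_seq om 1 m).
  { intros n. destruct (realizable_fact_pow_nat n) as [V [HV [HG HB]]].
    destruct (proj1 (Heq V HV) HG) as [rho [Hr [C HC]]].
    destruct (fact_pow_le_om_seq_1 om n rho (Rmax C 1) Hw Hr) as [c [D [Hc [HD H]]]].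
    - pose proof (Rmax_r C 1); lra.
    - intros k. eapply Rle_trans; [apply HB|]. eapply Rle_trans; [apply HC|].
      apply Rmult_le_compat_r; [left; apply exp_pos | apply Rmax_l].
    - exists (c, D). simpl. auto. }
  destruct (choice _ Hs) as [cD HcD].
  destruct (realizable_G_roum_diag (fun n => fst (cD n)) (fun n => snd (cD n))) as [W [HW [HnG HZ]]];
    [apply HcD | apply HcD|].
  apply HnG, Heq; auto. exists 1. split; [lra|]. exists 1. intros k. rewrite Rmult_1_l.
  apply (HZ (om_seq om 1)). apply HcD.
Qed.

Theorem theorem5p22 :
  (forall M : nat -> R, (forall k, 0 < M k) ->
     ~ same_space E_G_beur (E_beur M) /\ ~ same_space E_G_beur (E_roum M) /\
     ~ same_space E_G_roum (E_beur M) /\ ~ same_space E_G_roum (E_roum M)) /\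
  (forall om : R -> R, weight om ->
     ~ same_space E_G_beur (E_om_beur om) /\ ~ same_space E_G_beur (E_om_roum om) /\
     ~ same_space E_G_roum (E_om_beur om) /\ ~ same_space E_G_roum (E_om_roum om)).
Proof.
  pose proof E_G_beur_realizes as HGb. pose proof E_G_roum_realizes as HGr.
  split.
  - intros M HM.
    pose proof (fun V F HF => E_beur_realizes V F HF M) as Hb.
    pose proof (fun V F HF => E_roum_realizes V F HF M) as Hr.
    repeat split; intros Hs.
    + exact (G_beur_neq_beur M HM (same_on_realizable_of_same_space _ _ _ _ HGb Hb Hs)).
    + exact (G_beur_neq_roum M HM (same_on_realizable_of_same_space _ _ _ _ HGb Hr Hs)).
    + exact (G_roum_neq_beur M HM (same_on_realizable_of_same_space _ _ _ _ HGr Hb Hs)).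
    + exact (G_roum_neq_roum M HM (same_on_realizable_of_same_space _ _ _ _ HGr Hr Hs)).
  - intros om Hw.
    pose proof (fun V F HF => E_om_beur_realizes V F HF om) as Hb.
    pose proof (fun V F HF => E_om_roum_realizes V F HF om) as Hr.
    repeat split; intros Hs.
    + exact (G_beur_neq_om_beur om Hw (same_on_realizable_of_same_space _ _ _ _ HGb Hb Hs)).
    + exact (G_beur_neq_om_roum om Hw (same_on_realizable_of_same_space _ _ _ _ HGb Hr Hs)).
    + exact (G_roum_neq_om_beur om Hw (same_on_realizable_of_same_space _ _ _ _ HGr Hb Hs)).
    + exact (G_roum_neq_om_roum om Hw (same_on_realizable_of_same_space _ _ _ _ HGr Hr Hs)).
Qed.
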